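(* Let $G$ be a locally compact abelian group with a compact open subgroup $M$. Suppose that $G$ is divisible and torsion-free, that $M$ is adic and that $G/M$ is a discrete Artinian group. Then $G$ is local, i.e. isomorphic to a finite direct product of groups $\mathbf{Q}_p$ ($p$ prime, not necessarily distinct).
   Context: A locally compact group is adic if it is isomorphic to a finite direct product of finite groups and groups $\mathbf{Z}_n=\varprojlim\mathbf{Z}/n^k\mathbf{Z}$. A discrete abelian group is Artinian if it has no infinite strictly decreasing chain of subgroups. Isomorphisms are topological. *)

From Stdlib Require Import Reals Lra Lia ZArith Znumtheory List.
Open Scope R_scope.

Record TopAb := mkTopAb {
  car :> Type;
  tzero : car;
  tadd : car -> car -> car;
  topp : car -> car;
  topen : (car -> Prop) -> Prop
}.
Arguments tzero {t}.
Arguments tadd {t} _ _.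
Arguments topp {t} _.

Section GroupProps.
Variable A : TopAb.

Definition is_abgroup : Prop :=
  (forall x y z : A, tadd x (tadd y z) = tadd (tadd x y) z) /\
  (forall x y : A, tadd x y = tadd y x) /\
  (forall x : A, tadd tzero x = x) /\
  (forall x : A, tadd (topp x) x = tzero).

Definition is_topology : Prop :=
  topen A (fun _ => True) /\
  (forall U V, topen A U -> topen A V -> topen A (fun x => U x /\ V x)) /\
  (forall F : (A -> Prop) -> Prop, (forall U, F U -> topen A U) ->
     topen A (fun x => exists U, F U /\ U x)).

Definition sub_continuous : Prop :=
  forall U, topen A U -> forall x y : A, U (tadd x (topp y)) ->
    exists V W, topen A V /\ topen A W /\ V x /\ W y /\
      forall a b, V a -> W b -> U (tadd a (topp b)).

Definition hausdorff : Prop :=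
  forall x y : A, x <> y -> exists U V, topen A U /\ topen A V /\ U x /\ V y /\
    forall z, ~ (U z /\ V z).

Definition tcompact (K : A -> Prop) : Prop :=
  forall F : (A -> Prop) -> Prop, (forall U, F U -> topen A U) ->
    (forall x, K x -> exists U, F U /\ U x) ->
    exists l : list (A -> Prop), (forall U, In U l -> F U) /\
      (forall x, K x -> exists U, In U l /\ U x).

Definition locally_compact : Prop :=
  forall x : A, exists U K, topen A U /\ U x /\ (forall y, U y -> K y) /\ tcompact K.

Definition is_LCA : Prop :=
  is_abgroup /\ is_topology /\ sub_continuous /\ hausdorff /\ locally_compact.

Definition is_subgroup (M : A -> Prop) : Prop :=
  M tzero /\ (forall x y, M x -> M y -> M (tadd x y)) /\ (forall x, M x -> M (topp x)).

Definition tmuln (n : nat) (x : A) : A := Nat.iter n (tadd x) tzero.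

Definition divisible : Prop :=
  forall (x : A) (n : nat), (0 < n)%nat -> exists y, tmuln n y = x.

Definition torsion_free : Prop :=
  forall (x : A) (n : nat), (0 < n)%nat -> tmuln n x = tzero -> x = tzero.

Definition finite_car : Prop := exists l : list A, forall x, In x l.

Definition discrete : Prop := forall U : A -> Prop, topen A U.
End GroupProps.

Definition top_iso (A B : TopAb) : Prop :=
  exists f : A -> B,
    (forall x y, f (tadd x y) = tadd (f x) (f y)) /\
    (forall x y, f x = f y -> x = y) /\
    (forall y, exists x, f x = y) /\
    (forall V, topen B V -> topen A (fun x => V (f x))) /\
    (forall U, topen A U -> topen B (fun y => exists x, U x /\ f x = y)).

Section Sub.
Variables (A : TopAb) (M : A -> Prop) (HM : is_subgroup A M).

Definition sub_zero : {x : A | M x} :=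
  exist _ tzero (proj1 HM).
Definition sub_add (x y : {x : A | M x}) : {x : A | M x} :=
  exist _ (tadd (proj1_sig x) (proj1_sig y))
    (proj1 (proj2 HM) _ _ (proj2_sig x) (proj2_sig y)).
Definition sub_opp (x : {x : A | M x}) : {x : A | M x} :=
  exist _ (topp (proj1_sig x)) (proj2 (proj2 HM) _ (proj2_sig x)).
Definition sub_open (V : {x : A | M x} -> Prop) : Prop :=
  exists U, topen A U /\ forall x, V x <-> U (proj1_sig x).

Definition subTopAb : TopAb := mkTopAb {x : A | M x} sub_zero sub_add sub_opp sub_open.
End Sub.

Definition prod_open (A B : TopAb) (V : A * B -> Prop) : Prop :=
  forall z, V z -> exists U W, topen A U /\ topen B W /\ U (fst z) /\ W (snd z) /\
    forall a b, U a -> W b -> V (a, b).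

Definition prodTopAb (A B : TopAb) : TopAb :=
  mkTopAb (A * B) (tzero, tzero)
    (fun x y => (tadd (fst x) (fst y), tadd (snd x) (snd y)))
    (fun x => (topp (fst x), topp (snd x)))
    (prod_open A B).

Definition unitTopAb : TopAb :=
  mkTopAb unit tt (fun _ _ => tt) (fun _ => tt) (fun _ => True).

Fixpoint bigprod (l : list TopAb) : TopAb :=
  match l with
  | nil => unitTopAb
  | A :: l' => prodTopAb A (bigprod l')
  end.

(** * The n-adic integers Z_n = lim Z/n^k Z  (n >= 2)
    An element is a compatible family (x_k)_k with x_k in [0, n^k)
    representing the class mod n^k; the topology is the inverse-limit
    (product of discrete) topology. *)
Section Zadic.
Open Scope Z_scope.
Variables (n : Z) (Hn : 2 <= n).

Definition npow (k : nat) : Z := n ^ Z.of_nat k.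

Definition Zn_ok (x : nat -> Z) : Prop :=
  forall k, 0 <= x k < npow k /\ exists z, x (S k) - x k = z * npow k.

Lemma npow_pos k : 0 < npow k.
Proof. unfold npow; apply Z.pow_pos_nonneg; lia. Qed.

Lemma npow_S k : npow (S k) = n * npow k.
Proof. unfold npow; rewrite Nat2Z.inj_succ, Z.pow_succ_r; lia. Qed.

Lemma Zn_norm (u : nat -> Z) :
  (forall k, exists z, u (S k) - u k = z * npow k) ->
  Zn_ok (fun k => u k mod npow k).
Proof.
  intros H k; split.
  - apply Z.mod_pos_bound, npow_pos.
  - destruct (H k) as [z Hz].
    pose proof (npow_pos k) as P0. pose proof (npow_pos (S k)) as P1.
    rewrite (Z.mod_eq (u (S k))), (Z.mod_eq (u k)) by lia.
    set (q1 := u (S k) / npow (S k)). set (q0 := u k / npow k).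
    rewrite npow_S.
    exists (z - n * q1 + q0).
    assert (E : u (S k) = u k + z * npow k) by lia. rewrite E. ring.
Qed.

Definition Zn_car := {x : nat -> Z | Zn_ok x}.

Lemma Zn_zero_ok : Zn_ok (fun _ => 0).
Proof. intros k; split; [pose proof (npow_pos k); lia| exists 0; ring]. Qed.

Lemma Zn_add_ok (x y : Zn_car) :
  Zn_ok (fun k => (proj1_sig x k + proj1_sig y k) mod npow k).
Proof.
  apply (Zn_norm (fun k => proj1_sig x k + proj1_sig y k)); intros k.
  destruct (proj2 (proj2_sig x k)) as [a Ha], (proj2 (proj2_sig y k)) as [b Hb].
  exists (a + b); lia.
Qed.

Lemma Zn_opp_ok (x : Zn_car) :
  Zn_ok (fun k => (- proj1_sig x k) mod npow k).
Proof.
  apply (Zn_norm (fun k => - proj1_sig x k)); intros k.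
  destruct (proj2 (proj2_sig x k)) as [a Ha]. exists (- a); lia.
Qed.

Definition Zn_open (V : Zn_car -> Prop) : Prop :=
  forall x, V x -> exists k, forall y, proj1_sig y k = proj1_sig x k -> V y.

Definition Zadic : TopAb :=
  mkTopAb Zn_car (exist _ _ Zn_zero_ok)
    (fun x y => exist _ _ (Zn_add_ok x y))
    (fun x => exist _ _ (Zn_opp_ok x)) Zn_open.
End Zadic.

(** * The p-adic numbers Q_p  (p prime), as the inverse limit
    Q_p = lim_k Q_p / p^k Z_p = lim_k Z[1/p] / p^k Z.
    An element is a family (x_k)_k of reals with x_k in Z[1/p] /\ [0, p^k)
    (the canonical representative of the class mod p^k), compatible
    (x_{k+1} = x_k mod p^k); the topology is the inverse-limit topology
    (product of discrete topologies). *)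
Section Qadic.
Variables (p : Z) (Hp : prime p).

Definition ppow (k : nat) : R := IZR p ^ k.

Definition in_Z1p (x : R) : Prop := exists (j : nat) (z : Z), x * ppow j = IZR z.

Definition modR (x m : R) : R := x - IZR (Int_part (x / m)) * m.

Definition Qp_ok (x : nat -> R) : Prop :=
  forall k, in_Z1p (x k) /\ 0 <= x k < ppow k /\
            exists z, x (S k) - x k = IZR z * ppow k.

Lemma ppow_pos k : 0 < ppow k.
Proof.
  unfold ppow; apply pow_lt; apply IZR_lt; pose proof (prime_ge_2 p Hp); lia.
Qed.

Lemma ppow_IZR k : ppow k = IZR (p ^ Z.of_nat k).
Proof. unfold ppow; apply pow_IZR. Qed.

Lemma modR_bound x m : 0 < m -> 0 <= modR x m < m.
Proof.
  intros Hm; unfold modR.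
  destruct (base_Int_part (x / m)) as [H1 H2].
  set (q := IZR (Int_part (x / m))) in *.
  assert (E : x = (x / m) * m) by (field; lra).
  split; rewrite E at 1; nra.
Qed.

Lemma in_Z1p_add x y : in_Z1p x -> in_Z1p y -> in_Z1p (x + y).
Proof.
  intros [i [a Ha]] [j [b Hb]]. exists (i + j)%nat.
  exists (a * p ^ Z.of_nat j + b * p ^ Z.of_nat i)%Z.
  rewrite plus_IZR, !mult_IZR, <- !ppow_IZR. unfold ppow in *.
  rewrite pow_add, <- Ha, <- Hb. ring.
Qed.

Lemma in_Z1p_opp x : in_Z1p x -> in_Z1p (- x).
Proof.
  intros [i [a Ha]]; exists i, (- a)%Z. rewrite opp_IZR, <- Ha; ring.
Qed.

Lemma in_Z1p_int_mul z k : in_Z1p (IZR z * ppow k).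
Proof.
  exists O, (z * p ^ Z.of_nat k)%Z. rewrite mult_IZR, <- ppow_IZR.
  unfold ppow at 2; simpl; ring.
Qed.

Lemma Qp_norm (u : nat -> R) :
  (forall k, in_Z1p (u k) /\ exists z, u (S k) - u k = IZR z * ppow k) ->
  Qp_ok (fun k => modR (u k) (ppow k)).
Proof.
  intros H k; destruct (H k) as [Hk [z Hz]]; split; [|split].
  - unfold modR; unfold Rminus; apply in_Z1p_add; auto.
    replace (- (IZR (Int_part (u k / ppow k)) * ppow k)) with
      (IZR (- Int_part (u k / ppow k)) * ppow k) by (rewrite opp_IZR; ring).
    apply in_Z1p_int_mul.
  - apply modR_bound, ppow_pos.
  - unfold modR.
    exists (z - Int_part (u (S k) / ppow (S k)) * p + Int_part (u k / ppow k))%Z.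
    rewrite plus_IZR, minus_IZR, mult_IZR.
    replace (ppow (S k)) with (IZR p * ppow k) by (unfold ppow; simpl; ring).
    replace (u (S k)) with (u k + IZR z * ppow k) at 1 by lra. ring.
Qed.

Definition Qp_car := {x : nat -> R | Qp_ok x}.

Lemma Qp_zero_ok : Qp_ok (fun _ => 0).
Proof.
  intros k; split; [|split].
  - exists O, 0%Z; ring.
  - pose proof (ppow_pos k); lra.
  - exists 0%Z; ring.
Qed.

Lemma Qp_add_ok (x y : Qp_car) :
  Qp_ok (fun k => modR (proj1_sig x k + proj1_sig y k) (ppow k)).
Proof.
  apply (Qp_norm (fun k => proj1_sig x k + proj1_sig y k)); intros k.
  destruct (proj2_sig x k) as [Hx [_ [a Ha]]], (proj2_sig y k) as [Hy [_ [b Hb]]].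
  split; [now apply in_Z1p_add|]. exists (a + b)%Z. rewrite plus_IZR; lra.
Qed.

Lemma Qp_opp_ok (x : Qp_car) :
  Qp_ok (fun k => modR (- proj1_sig x k) (ppow k)).
Proof.
  apply (Qp_norm (fun k => - proj1_sig x k)); intros k.
  destruct (proj2_sig x k) as [Hx [_ [a Ha]]].
  split; [now apply in_Z1p_opp|]. exists (- a)%Z. rewrite opp_IZR; lra.
Qed.

Definition Qp_open (V : Qp_car -> Prop) : Prop :=
  forall x, V x -> exists k, forall y, proj1_sig y k = proj1_sig x k -> V y.

Definition Qadic : TopAb :=
  mkTopAb Qp_car (exist _ _ Qp_zero_ok)
    (fun x y => exist _ _ (Qp_add_ok x y))
    (fun x => exist _ _ (Qp_opp_ok x)) Qp_open.
End Qadic.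

Definition adic_factor (A : TopAb) : Prop :=
  (is_abgroup A /\ finite_car A /\ discrete A) \/
  (exists (n : Z) (Hn : (2 <= n)%Z), top_iso A (Zadic n Hn)).

Definition adic (A : TopAb) : Prop :=
  exists l : list TopAb, Forall adic_factor l /\ top_iso A (bigprod l).

Definition local (A : TopAb) : Prop :=
  exists l : list {p : Z | prime p},
    top_iso A (bigprod (map (fun s => Qadic (proj1_sig s) (proj2_sig s)) l)).

(** G/M Artinian, expressed via the correspondence theorem: subgroups of G/M
    are exactly H/M for subgroups H of G containing M (H |-> H/M is an
    order isomorphism). *)
Definition quotient_artinian (A : TopAb) (M : A -> Prop) : Prop :=
  ~ exists H : nat -> (A -> Prop),
      (forall i, is_subgroup A (H i) /\ (forall x, M x -> H i x)) /\
      (forall i, (forall x, H (S i) x -> H i x) /\ exists x, H i x /\ ~ H (S i) x).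

From Stdlib Require Import Reals ZArith Znumtheory Zpow_facts List Lia Lra.
From Stdlib Require Import FunctionalExtensionality PropExtensionality ProofIrrelevance
  ClassicalEpsilon Classical.

(* Torsion-freeness kills the finite factors of the adic group M, and the
   Chinese remainder theorem together with Z_{p^e} = Z_p splits each Z_n, so
   M is isomorphic to the open subgroup N = Z_{p_1} x ... x Z_{p_k} of
   T = Q_{p_1} x ... x Q_{p_k}.  An Artinian group has no element of infinite
   order, so G/M is torsion, and so is T/N.  As G and T are divisible and
   torsion-free, an isomorphism f : M -> N extends to G by Phi x = f (n x) / n
   whenever n x lies in M.  Phi is additive, it is continuous because near
   every point it is a translate of f, and the extension of f^-1 inverts it. *)

Section AbGroup.
Variable A : TopAb.
Hypothesis HA : is_abgroup A.

Lemma tadd_assoc (x y z : A) : tadd x (tadd y z) = tadd (tadd x y) z.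
Proof. apply HA. Qed.
Lemma tadd_comm (x y : A) : tadd x y = tadd y x.
Proof. apply HA. Qed.
Lemma tadd_0l (x : A) : tadd tzero x = x.
Proof. apply HA. Qed.
Lemma tadd_0r (x : A) : tadd x tzero = x.
Proof. rewrite tadd_comm; apply tadd_0l. Qed.
Lemma tadd_Nl (x : A) : tadd (topp x) x = tzero.
Proof. apply HA. Qed.
Lemma tadd_Nr (x : A) : tadd x (topp x) = tzero.
Proof. rewrite tadd_comm; apply tadd_Nl. Qed.

Lemma tadd_cancel_l (a x y : A) : tadd a x = tadd a y -> x = y.
Proof.
  intros H. rewrite <- (tadd_0l x), <- (tadd_0l y), <- (tadd_Nl a), <- !tadd_assoc, H.
  reflexivity.
Qed.

Lemma topp_unique (x y : A) : tadd x y = tzero -> y = topp x.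
Proof. intros H; apply (tadd_cancel_l x). rewrite H, tadd_Nr; reflexivity. Qed.
Lemma topp_involutive (x : A) : topp (topp x) = x.
Proof. symmetry; apply topp_unique, tadd_Nl. Qed.
Lemma topp_0 : topp (@tzero A) = tzero.
Proof. symmetry; apply topp_unique, tadd_0l. Qed.
Lemma topp_add (x y : A) : topp (tadd x y) = tadd (topp x) (topp y).
Proof.
  symmetry; apply topp_unique.
  rewrite (tadd_comm (topp x)), tadd_assoc, <- (tadd_assoc x y), tadd_Nr, tadd_0r, tadd_Nr.
  reflexivity.
Qed.
Lemma tsub_eq0 (x y : A) : tadd x (topp y) = tzero -> x = y.
Proof.
  intros H. rewrite <- (topp_involutive y). apply topp_unique. rewrite tadd_comm; exact H.
Qed.

Lemma tadd_swap4 (a b c d : A) : tadd (tadd a b) (tadd c d) = tadd (tadd a c) (tadd b d).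
Proof.
  rewrite <- !tadd_assoc. f_equal. rewrite !tadd_assoc. f_equal. apply tadd_comm.
Qed.

Lemma tmulnDn a b (x : A) : tmuln A (a + b) x = tadd (tmuln A a x) (tmuln A b x).
Proof.
  induction a; simpl; [rewrite tadd_0l; reflexivity|].
  rewrite IHa, tadd_assoc; reflexivity.
Qed.
Lemma tmuln_zero n : tmuln A n tzero = tzero.
Proof. induction n; simpl; [reflexivity| rewrite IHn; apply tadd_0l]. Qed.
Lemma tmulnD n (x y : A) : tmuln A n (tadd x y) = tadd (tmuln A n x) (tmuln A n y).
Proof.
  induction n; simpl; [rewrite tadd_0l; reflexivity|].
  rewrite IHn, tadd_swap4; reflexivity.
Qed.
Lemma tmulnM a b (x : A) : tmuln A (a * b) x = tmuln A a (tmuln A b x).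
Proof. induction a; simpl; [reflexivity|]. rewrite tmulnDn, IHa; reflexivity. Qed.
Lemma tmulnN n (x : A) : tmuln A n (topp x) = topp (tmuln A n x).
Proof. apply topp_unique. rewrite <- tmulnD, tadd_Nr. apply tmuln_zero. Qed.
Lemma tmuln1 (x : A) : tmuln A 1 x = x.
Proof. simpl; apply tadd_0r. Qed.

Lemma subgroup_tmuln (M : A -> Prop) : is_subgroup A M -> forall n x, M x -> M (tmuln A n x).
Proof. intros [H0 [Hadd _]] n x Hx; induction n; simpl; auto. Qed.

Lemma torsion_free_tmuln_inj : torsion_free A -> forall n (x y : A), (0 < n)%nat ->
  tmuln A n x = tmuln A n y -> x = y.
Proof.
  intros Htf n x y Hn E. apply tsub_eq0, (Htf _ n Hn).
  rewrite tmulnD, tmulnN, E; apply tadd_Nr.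
Qed.
End AbGroup.

Section Hom.
Variables (A B : TopAb) (f : A -> B).
Hypothesis f_add : forall x y, f (tadd x y) = tadd (f x) (f y).
Hypothesis HB : is_abgroup B.

Lemma hom_tmuln_offset n x : f (tmuln A n x) = tadd (tmuln B n (f x)) (f tzero).
Proof.
  induction n; simpl; [rewrite (tadd_0l B HB); auto|].
  rewrite f_add, IHn, (tadd_assoc B HB); auto.
Qed.

Hypothesis HA : is_abgroup A.

Lemma hom_zero : f tzero = tzero.
Proof.
  apply (tadd_cancel_l B HB (f tzero)). rewrite <- f_add, (tadd_0l A HA), (tadd_0r B HB); auto.
Qed.
Lemma hom_tmuln n x : f (tmuln A n x) = tmuln B n (f x).
Proof. rewrite hom_tmuln_offset, hom_zero, (tadd_0r B HB); auto. Qed.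
End Hom.

(* Unlike [torsion_free], this makes sense before the group axioms are known,
   e.g. for the factors of an adic decomposition. *)
Definition tmuln_injective (A : TopAb) : Prop :=
  forall d (z1 z2 : A), (0 < d)%nat -> tmuln A d z1 = tmuln A d z2 -> z1 = z2.

Lemma tmuln_injective_of_hom (A B : TopAb) (f : A -> B) :
  (forall x y, f (tadd x y) = tadd (f x) (f y)) -> (forall x y, f x = f y -> x = y) ->
  is_abgroup B -> torsion_free B -> tmuln_injective A.
Proof.
  intros f_add f_inj HB Htf d z1 z2 Hd E. apply f_inj.
  apply (torsion_free_tmuln_inj B HB Htf d _ _ Hd), (tadd_cancel_l B HB (f tzero)).
  rewrite !(tadd_comm B HB (f tzero)), <- !(hom_tmuln_offset A B f f_add HB), E; auto.
Qed.

(** * Topological isomorphisms and products *)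

Lemma pred_ext {T} (P Q : T -> Prop) : (forall x, P x <-> Q x) -> P = Q.
Proof. intros H; extensionality x; apply propositional_extensionality; apply H. Qed.

Lemma topen_ext (A : TopAb) (U V : A -> Prop) :
  (forall x, U x <-> V x) -> topen A U -> topen A V.
Proof. intros H; rewrite (pred_ext U V H); auto. Qed.

Definition continuous_map (A B : TopAb) (f : A -> B) : Prop :=
  forall V, topen B V -> topen A (fun x => V (f x)).

Lemma top_iso_of_inverse (A B : TopAb) (f : A -> B) (g : B -> A) :
  (forall x y, f (tadd x y) = tadd (f x) (f y)) ->
  (forall x, g (f x) = x) -> (forall y, f (g y) = y) ->
  continuous_map A B f -> continuous_map B A g -> top_iso A B.
Proof.
  intros f_add gf fg fc gc. exists f; repeat split; auto.
  - intros x y E; rewrite <- (gf x), <- (gf y), E; auto.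
  - intros y; exists (g y); auto.
  - intros U HU; eapply topen_ext; [|exact (gc _ HU)].
    intros y; split; [intros H; exists (g y); auto|intros [x [Hx <-]]; rewrite gf; auto].
Qed.

Lemma top_iso_inverse A B : top_iso A B -> exists (f : A -> B) (g : B -> A),
  (forall x y, f (tadd x y) = tadd (f x) (f y)) /\
  (forall x y, g (tadd x y) = tadd (g x) (g y)) /\
  (forall x, g (f x) = x) /\ (forall y, f (g y) = y) /\
  continuous_map A B f /\ continuous_map B A g.
Proof.
  intros [f [f_add [f_inj [f_surj [fc fo]]]]].
  assert (Hg : forall y, {x | f x = y}).
  { intros y; apply constructive_indefinite_description; auto. }
  set (g := fun y => proj1_sig (Hg y)).
  assert (fg : forall y, f (g y) = y) by (intros y; exact (proj2_sig (Hg y))).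
  assert (gf : forall x, g (f x) = x) by (intros x; apply f_inj, fg).
  exists f, g; repeat split; auto.
  - intros x y; apply f_inj; rewrite f_add, !fg; reflexivity.
  - intros V HV; eapply topen_ext; [|exact (fo _ HV)].
    intros y; split; [intros [x [Hx <-]]; rewrite gf; auto|intros H; exists (g y); auto].
Qed.

Lemma top_iso_refl A : top_iso A A.
Proof.
  apply (top_iso_of_inverse A A (fun x => x) (fun x => x)); auto; intros V HV; exact HV.
Qed.

Lemma top_iso_sym A B : top_iso A B -> top_iso B A.
Proof.
  intros Hiso. destruct (top_iso_inverse _ _ Hiso) as [f [g [_ [g_add [gf [fg [fc gc]]]]]]].
  apply (top_iso_of_inverse B A g f); auto.
Qed.

Lemma top_iso_trans A B C : top_iso A B -> top_iso B C -> top_iso A C.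
Proof.
  intros HAB HBC.
  destruct (top_iso_inverse _ _ HAB) as [f [f' [f_add [_ [f'f [ff' [fc f'c]]]]]]].
  destruct (top_iso_inverse _ _ HBC) as [g [g' [g_add [_ [g'g [gg' [gc g'c]]]]]]].
  apply (top_iso_of_inverse A C (fun x => g (f x)) (fun z => f' (g' z))).
  - intros x y; rewrite f_add, g_add; auto.
  - intros x; rewrite g'g, f'f; auto.
  - intros z; rewrite ff', gg'; auto.
  - intros V HV; exact (fc _ (gc _ HV)).
  - intros V HV; exact (g'c _ (f'c _ HV)).
Qed.

Lemma prod_box_open (A B : TopAb) (U : A -> Prop) (W : B -> Prop) :
  topen A U -> topen B W -> topen (prodTopAb A B) (fun z => U (fst z) /\ W (snd z)).
Proof. intros HU HW z [Hz1 Hz2]. exists U, W; repeat split; auto. Qed.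

Lemma tmuln_fst (A B : TopAb) n (z : prodTopAb A B) :
  fst (tmuln (prodTopAb A B) n z) = tmuln A n (fst z).
Proof. induction n; simpl; auto. rewrite IHn; auto. Qed.
Lemma tmuln_snd (A B : TopAb) n (z : prodTopAb A B) :
  snd (tmuln (prodTopAb A B) n z) = tmuln B n (snd z).
Proof. induction n; simpl; auto. rewrite IHn; auto. Qed.

Lemma tmuln_injective_prod_l A B : tmuln_injective (prodTopAb A B) -> tmuln_injective A.
Proof.
  intros H d a1 a2 Hd E.
  assert (E2 : ((a1, @tzero B) : prodTopAb A B) = (a2, tzero)).
  { apply (H d _ _ Hd), injective_projections; [rewrite !tmuln_fst|rewrite !tmuln_snd]; auto. }
  congruence.
Qed.
Lemma tmuln_injective_prod_r A B : tmuln_injective (prodTopAb A B) -> tmuln_injective B.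
Proof.
  intros H d b1 b2 Hd E.
  assert (E2 : ((@tzero A, b1) : prodTopAb A B) = (tzero, b2)).
  { apply (H d _ _ Hd), injective_projections; [rewrite !tmuln_fst|rewrite !tmuln_snd]; auto. }
  congruence.
Qed.

Lemma top_iso_prod A A' B B' : top_iso A A' -> top_iso B B' ->
  top_iso (prodTopAb A B) (prodTopAb A' B').
Proof.
  intros HA HB.
  destruct (top_iso_inverse _ _ HA) as [f [f' [f_add [_ [f'f [ff' [fc f'c]]]]]]].
  destruct (top_iso_inverse _ _ HB) as [g [g' [g_add [_ [g'g [gg' [gc g'c]]]]]]].
  apply (top_iso_of_inverse (prodTopAb A B) (prodTopAb A' B')
    (fun z => (f (fst z), g (snd z))) (fun z => (f' (fst z), g' (snd z)))).
  - intros x y; simpl; rewrite f_add, g_add; auto.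
  - intros [x1 x2]; simpl; rewrite f'f, g'g; auto.
  - intros [y1 y2]; simpl; rewrite ff', gg'; auto.
  - intros V HV [x1 x2] Hx.
    destruct (HV _ Hx) as [U [W [HU [HW [H1 [H2 H3]]]]]].
    exists (fun a => U (f a)), (fun b => W (g b)); repeat split; auto.
  - intros V HV [y1 y2] Hy.
    destruct (HV _ Hy) as [U [W [HU [HW [H1 [H2 H3]]]]]].
    exists (fun a => U (f' a)), (fun b => W (g' b)); repeat split; auto.
Qed.

Lemma top_iso_prodA A B C :
  top_iso (prodTopAb (prodTopAb A B) C) (prodTopAb A (prodTopAb B C)).
Proof.
  apply (top_iso_of_inverse (prodTopAb (prodTopAb A B) C) (prodTopAb A (prodTopAb B C))
    (fun z => (fst (fst z), (snd (fst z), snd z))) (fun z => ((fst z, fst (snd z)), snd (snd z)))).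
  - intros; reflexivity.
  - intros [[a b] c]; reflexivity.
  - intros [a [b c]]; reflexivity.
  - intros V HV [[a b] c] Hz.
    destruct (HV _ Hz) as [U1 [W [HU1 [HW [H1 [H2 H3]]]]]].
    destruct (HW _ H2) as [U2 [U3 [HU2 [HU3 [H4 [H5 H6]]]]]].
    exists (fun z : prodTopAb A B => U1 (fst z) /\ U2 (snd z)), U3.
    repeat split; auto using prod_box_open.
    intros [a' b'] c' [Ha Hb] Hc. apply H3; auto.
  - intros V HV [a [b c]] Hz.
    destruct (HV _ Hz) as [W [U3 [HW [HU3 [H1 [H2 H3]]]]]].
    destruct (HW _ H1) as [U1 [U2 [HU1 [HU2 [H4 [H5 H6]]]]]].
    exists U1, (fun z : prodTopAb B C => U2 (fst z) /\ U3 (snd z)).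
    repeat split; auto using prod_box_open.
    intros a' [b' c'] Ha [Hb Hc]. apply (H3 (a', b') c'); auto.
Qed.

Definition open_local (B : TopAb) : Prop :=
  forall V : B -> Prop,
    (forall x, V x -> exists U, topen B U /\ U x /\ forall y, U y -> V y) -> topen B V.

Lemma open_local_prod A B : open_local (prodTopAb A B).
Proof.
  intros V H z Hz. destruct (H z Hz) as [U [HU [Uz HUV]]].
  destruct (HU z Uz) as [U1 [W1 [HU1 [HW1 [H1 [H2 H3]]]]]].
  exists U1, W1; repeat split; auto.
Qed.
Lemma open_local_unit : open_local unitTopAb.
Proof. intros V _; exact I. Qed.
Lemma open_local_bigprod l : open_local (bigprod l).
Proof. destruct l; [apply open_local_unit| apply open_local_prod]. Qed.

Lemma top_iso_unit_prod B : open_local B -> top_iso (prodTopAb unitTopAb B) B.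
Proof.
  intros HB.
  apply (top_iso_of_inverse (prodTopAb unitTopAb B) B snd (fun b => (tt, b))).
  - intros; reflexivity.
  - intros [[] b]; reflexivity.
  - intros; reflexivity.
  - intros V HV [[] b] Hb. exists (fun _ => True), V; repeat split; auto.
  - intros V HV. apply HB. intros b Hb.
    destruct (HV _ Hb) as [U [W [HU [HW [H1 [H2 H3]]]]]].
    exists W; repeat split; auto.
Qed.

Lemma top_iso_prod_unit A : open_local A -> top_iso (prodTopAb A unitTopAb) A.
Proof.
  intros HA.
  apply (top_iso_of_inverse (prodTopAb A unitTopAb) A fst (fun a => (a, tt))).
  - intros; reflexivity.
  - intros [a []]; reflexivity.
  - intros; reflexivity.
  - intros V HV [a []] Ha. exists V, (fun _ => True); repeat split; auto.
  - intros V HV. apply HA. intros a Ha.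
    destruct (HV _ Ha) as [U [W [HU [HW [H1 [H2 H3]]]]]].
    exists U; repeat split; auto.
Qed.

Lemma top_iso_bigprod_app l1 l2 :
  top_iso (bigprod (l1 ++ l2)) (prodTopAb (bigprod l1) (bigprod l2)).
Proof.
  induction l1 as [|A l1 IH]; simpl.
  - apply top_iso_sym, top_iso_unit_prod, open_local_bigprod.
  - eapply top_iso_trans; [apply top_iso_prod; [apply top_iso_refl| exact IH]|].
    apply top_iso_sym, top_iso_prodA.
Qed.

Lemma abgroup_prod A B : is_abgroup A -> is_abgroup B -> is_abgroup (prodTopAb A B).
Proof.
  intros HA HB; repeat split.
  - intros [] [] []; simpl; f_equal; apply tadd_assoc; auto.
  - intros [] []; simpl; f_equal; apply tadd_comm; auto.
  - intros []; simpl; f_equal; apply tadd_0l; auto.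
  - intros []; simpl; f_equal; apply tadd_Nl; auto.
Qed.
Lemma abgroup_unit : is_abgroup unitTopAb.
Proof.
  repeat split; simpl; intros; repeat match goal with x : unit |- _ => destruct x end;
    reflexivity.
Qed.

Lemma torsion_free_prod A B : torsion_free A -> torsion_free B -> torsion_free (prodTopAb A B).
Proof.
  intros TA TB [a b] n Hn E.
  assert (E1 := f_equal fst E); assert (E2 := f_equal snd E).
  rewrite tmuln_fst in E1; rewrite tmuln_snd in E2; simpl in *.
  rewrite (TA _ _ Hn E1), (TB _ _ Hn E2); auto.
Qed.

Lemma top_iso_unit_of_trivial A : discrete A -> (forall x : A, x = tzero) -> top_iso A unitTopAb.
Proof.
  intros Hd Ht.
  apply (top_iso_of_inverse A unitTopAb (fun _ => tt) (fun _ => tzero)).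
  - intros; reflexivity.
  - intros x; rewrite (Ht x); auto.
  - intros []; reflexivity.
  - intros V _; apply Hd.
  - intros V _; exact I.
Qed.

(** * The n-adic integers *)

Open Scope Z_scope.

Section Zadic.
Variables (n : Z) (Hn : 2 <= n).
Notation Zn := (Zadic n Hn).

Definition zres (x : Zn) (k : nat) : Z := proj1_sig x k.

Lemma zres_range (x : Zn) k : 0 <= zres x k < npow n k.
Proof. apply (proj2_sig x k). Qed.

Lemma Zadic_eq (x y : Zn) : (forall k, zres x k = zres y k) -> x = y.
Proof.
  destruct x as [f Hf], y as [g Hg]; unfold zres; simpl; intros H.
  assert (f = g) by (extensionality k; auto). subst; f_equal; apply proof_irrelevance.
Qed.

Lemma npow_divide_le k j : (k <= j)%nat -> (npow n k | npow n j).
Proof.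
  intros H. unfold npow. exists (n ^ (Z.of_nat j - Z.of_nat k)).
  rewrite <- Z.pow_add_r; [f_equal|lia|lia]. lia.
Qed.

Lemma zres_divide_sub (x : Zn) k j : (k <= j)%nat -> (npow n k | zres x j - zres x k).
Proof.
  induction 1; [exists 0; lia|].
  destruct (proj2 (proj2_sig x m)) as [z Hz]. fold (zres x (S m)) (zres x m) in Hz.
  replace (zres x (S m) - zres x k) with ((zres x (S m) - zres x m) + (zres x m - zres x k))
    by lia.
  apply Z.divide_add_r; auto. rewrite Hz. apply Z.divide_mul_r, npow_divide_le; auto.
Qed.

Lemma zres_mod (x : Zn) k j : (k <= j)%nat -> zres x j mod npow n k = zres x k.
Proof. intros H; apply Zdivide_mod_minus; [apply zres_range| apply zres_divide_sub; auto]. Qed.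

Lemma zres_eq_le (x y : Zn) k j : (j <= k)%nat -> zres x k = zres y k -> zres x j = zres y j.
Proof. intros H E; rewrite <- (zres_mod x j k), <- (zres_mod y j k), E; auto. Qed.

Lemma zres_add (x y : Zn) k : zres (tadd x y) k = (zres x k + zres y k) mod npow n k.
Proof. reflexivity. Qed.

Lemma open_local_Zadic : open_local Zn.
Proof.
  intros V H x Hx. destruct (H x Hx) as [U [HU [Ux HUV]]].
  destruct (HU x Ux) as [k Hk]. exists k; auto.
Qed.

Lemma zres_cyl_open k (x : Zn) : topen Zn (fun y => zres y k = zres x k).
Proof. intros y Hy; exists k; intros y' Hy'; unfold zres in *; congruence. Qed.
End Zadic.

Section Reduction.
Variables (n a : Z) (Hn : 2 <= n) (Ha : 2 <= a) (Hdiv : (a | n)).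

Lemma npow_divide k : (npow a k | npow n k).
Proof.
  destruct Hdiv as [c Hc]. unfold npow. rewrite Hc, Z.pow_mul_l.
  apply Z.divide_mul_r, Z.divide_refl.
Qed.

Lemma zred_ok (x : Zadic n Hn) : Zn_ok a (fun k => zres n Hn x k mod npow a k).
Proof.
  apply Zn_norm; auto. intros k.
  destruct (zres_divide_sub n Hn x k (S k)) as [z Hz]; [lia|].
  destruct (npow_divide k) as [c Hc].
  exists (z * c). rewrite Hz, Hc; ring.
Qed.

Definition zred (x : Zadic n Hn) : Zadic a Ha := exist _ _ (zred_ok x).

Lemma zres_zred x k : zres a Ha (zred x) k = zres n Hn x k mod npow a k.
Proof. reflexivity. Qed.

Lemma zred_add x y : zred (tadd x y) = tadd (zred x) (zred y).
Proof.
  apply Zadic_eq; intros k. rewrite zres_zred, !zres_add, !zres_zred.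
  pose proof (npow_pos a Ha k); pose proof (npow_pos n Hn k).
  rewrite <- Zmod_div_mod; auto using npow_divide.
  rewrite Z.add_mod by lia. reflexivity.
Qed.

Lemma zred_continuous : continuous_map _ _ zred.
Proof.
  intros V HV x Hx. destruct (HV _ Hx) as [k Hk]. exists k.
  intros y Hy. apply Hk. fold (zres a Ha (zred y) k) (zres a Ha (zred x) k).
  rewrite !zres_zred. unfold zres; rewrite Hy; auto.
Qed.
End Reduction.

Section PrimePower.
Variables (p : Z) (e : nat) (Hp : 2 <= p) (He : (1 <= e)%nat) (Hn : 2 <= p ^ Z.of_nat e).

Lemma npow_pow k : npow (p ^ Z.of_nat e) k = npow p (e * k).
Proof. unfold npow. rewrite <- Z.pow_mul_r by lia. f_equal; lia. Qed.

Lemma divide_pow : (p | p ^ Z.of_nat e).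
Proof.
  exists (p ^ (Z.of_nat e - 1)). rewrite <- (Z.pow_1_r p) at 3.
  rewrite <- Z.pow_add_r by lia. f_equal; lia.
Qed.

(* The k-th residue mod (p^e)^k is the (e k)-th residue mod p^(e k). *)
Lemma zlift_ok (y : Zadic p Hp) : Zn_ok (p ^ Z.of_nat e) (fun k => zres p Hp y (e * k)).
Proof.
  intros k; split.
  - rewrite npow_pow; apply zres_range.
  - destruct (zres_divide_sub p Hp y (e * k) (e * S k)) as [z Hz]; [nia|].
    exists z; rewrite npow_pow; auto.
Qed.

Definition zlift (y : Zadic p Hp) : Zadic (p ^ Z.of_nat e) Hn := exist _ _ (zlift_ok y).

Lemma zres_zlift y k : zres _ Hn (zlift y) k = zres p Hp y (e * k).
Proof. reflexivity. Qed.

Lemma top_iso_Zadic_pow : top_iso (Zadic (p ^ Z.of_nat e) Hn) (Zadic p Hp).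
Proof.
  apply (top_iso_of_inverse _ _ (zred _ _ Hn Hp divide_pow) zlift).
  - apply zred_add.
  - intros x; apply Zadic_eq; intros k. rewrite zres_zlift, zres_zred, <- npow_pow.
    apply zres_mod; nia.
  - intros y; apply Zadic_eq; intros k. rewrite zres_zred, zres_zlift. apply (zres_mod p Hp y); nia.
  - apply zred_continuous.
  - intros V HV y Hy. destruct (HV _ Hy) as [k Hk]. exists (e * k)%nat.
    intros y' Hy'. apply Hk; exact Hy'.
Qed.
End PrimePower.

Lemma mod_divide_sub_of_compat (m m' w w' y y' : Z) : 0 < m -> 0 < m' -> (m | m') ->
  w mod m = y mod m -> w' mod m' = y' mod m' -> y' mod m = y mod m -> (m | w' - w).
Proof.
  intros Hm Hm' Hd E E' Ey. apply Z.mod_divide; [lia|]. apply Z.cong_iff_0.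
  rewrite E, (Zmod_div_mod m m' w') by auto. rewrite E', <- Zmod_div_mod by auto. exact Ey.
Qed.

Lemma bezout_mod (m m' y z u v : Z) : u * m + v * m' = 1 ->
  (y * v * m' + z * u * m) mod m = y mod m.
Proof.
  intros Huv.
  replace (y * v * m' + z * u * m) with (y * (u * m + v * m') + (z * u - y * u) * m) by ring.
  rewrite Huv, Z.mul_1_r. apply Z_mod_plus_full.
Qed.

Section CRT.
Variables (a b : Z) (Ha : 2 <= a) (Hb : 2 <= b) (Hab : rel_prime a b) (Hn : 2 <= a * b).

Lemma npow_mul k : npow (a * b) k = npow a k * npow b k.
Proof. unfold npow; apply Z.pow_mul_l. Qed.

Lemma rel_prime_npow k : rel_prime (npow a k) (npow b k).
Proof. unfold npow; apply rel_prime_Zpower; auto; lia. Qed.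

Lemma npow_mul_divide k d : (npow a k | d) -> (npow b k | d) -> (npow (a * b) k | d).
Proof.
  intros [t Ht] Hbd. rewrite Ht, Z.mul_comm in Hbd.
  apply Gauss in Hbd; [|apply rel_prime_sym, rel_prime_npow].
  destruct Hbd as [s Hs]. rewrite npow_mul, Ht, Hs. exists s; ring.
Qed.


Lemma crt_ex k y z : exists w, 0 <= w < npow (a * b) k /\
  w mod npow a k = y mod npow a k /\ w mod npow b k = z mod npow b k.
Proof.
  pose proof (npow_pos a Ha k); pose proof (npow_pos b Hb k).
  destruct (rel_prime_bezout _ _ (rel_prime_npow k)) as [u v Huv].
  set (w0 := y * v * npow b k + z * u * npow a k).
  exists (w0 mod npow (a * b) k). rewrite npow_mul.
  split; [apply Z.mod_pos_bound; nia|split].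
  - rewrite Z.mod_mod_divide by (exists (npow b k); ring). apply bezout_mod; auto.
  - rewrite Z.mod_mod_divide by (exists (npow a k); ring).
    unfold w0; rewrite Z.add_comm. apply bezout_mod. lia.
Qed.

Definition crt k y z : Z := proj1_sig (constructive_indefinite_description _ (crt_ex k y z)).

Lemma crt_spec k y z : 0 <= crt k y z < npow (a * b) k /\
  crt k y z mod npow a k = y mod npow a k /\ crt k y z mod npow b k = z mod npow b k.
Proof. unfold crt; destruct constructive_indefinite_description; auto. Qed.

Lemma crt_unique k w w' : 0 <= w < npow (a * b) k -> 0 <= w' < npow (a * b) k ->
  w mod npow a k = w' mod npow a k -> w mod npow b k = w' mod npow b k -> w = w'.
Proof.
  intros H1 H2 E1 E2. pose proof (npow_pos a Ha k); pose proof (npow_pos b Hb k).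
  assert (D : (npow (a * b) k | w - w')).
  { apply npow_mul_divide; apply Z.mod_divide; try lia; apply Z.cong_iff_0; auto. }
  symmetry; apply Zdivide_mod_minus in D; auto. rewrite Z.mod_small in D; auto.
Qed.

Notation Zab := (Zadic (a * b) Hn).
Notation ZaZb := (prodTopAb (Zadic a Ha) (Zadic b Hb)).

Lemma divide_mul_l : (a | a * b). Proof. exists b; ring. Qed.
Lemma divide_mul_r : (b | a * b). Proof. exists a; ring. Qed.

Definition crt_split (x : Zab) : ZaZb :=
  (zred _ _ Hn Ha divide_mul_l x, zred _ _ Hn Hb divide_mul_r x).

Lemma crt_join_ok (yz : ZaZb) :
  Zn_ok (a * b) (fun k => crt k (zres a Ha (fst yz) k) (zres b Hb (snd yz) k)).
Proof.
  intros k; split; [apply crt_spec|].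
  pose proof (npow_pos a Ha k); pose proof (npow_pos b Hb k).
  pose proof (npow_pos a Ha (S k)); pose proof (npow_pos b Hb (S k)).
  set (y := fst yz); set (z := snd yz).
  destruct (crt_spec k (zres a Ha y k) (zres b Hb z k)) as [_ [Ea Eb]].
  destruct (crt_spec (S k) (zres a Ha y (S k)) (zres b Hb z (S k))) as [_ [Ea' Eb']].
  destruct (npow_mul_divide k (crt (S k) (zres a Ha y (S k)) (zres b Hb z (S k)) -
                               crt k (zres a Ha y k) (zres b Hb z k))) as [c Hc].
  - apply (mod_divide_sub_of_compat _ _ _ _ _ _ H H1 (npow_divide_le a k (S k) ltac:(lia)) Ea Ea').
    rewrite (Z.mod_small (zres a Ha y k)) by apply zres_range. apply zres_mod; lia.
  - apply (mod_divide_sub_of_compat _ _ _ _ _ _ H0 H2 (npow_divide_le b k (S k) ltac:(lia)) Eb Eb').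
    rewrite (Z.mod_small (zres b Hb z k)) by apply zres_range. apply zres_mod; lia.
  - exists c; exact Hc.
Qed.

Definition crt_join (yz : ZaZb) : Zab := exist _ _ (crt_join_ok yz).

Lemma crt_join_split x : crt_join (crt_split x) = x.
Proof.
  apply Zadic_eq; intros k. unfold crt_join, zres at 1; simpl.
  pose proof (npow_pos a Ha k); pose proof (npow_pos b Hb k).
  destruct (crt_spec k (zres _ Hn x k mod npow a k) (zres _ Hn x k mod npow b k))
    as [R1 [R2 R3]].
  apply crt_unique with k; auto; [apply zres_range| |].
  - rewrite R2, Z.mod_mod; lia.
  - rewrite R3, Z.mod_mod; lia.
Qed.

Lemma crt_split_join yz : crt_split (crt_join yz) = yz.
Proof.
  destruct yz as [y z]; unfold crt_split; f_equal; apply Zadic_eq; intros k;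
    rewrite zres_zred; unfold crt_join, zres at 1; simpl.
  - destruct (crt_spec k (zres a Ha y k) (zres b Hb z k)) as [_ [-> _]].
    apply Z.mod_small, zres_range.
  - destruct (crt_spec k (zres a Ha y k) (zres b Hb z k)) as [_ [_ ->]].
    apply Z.mod_small, zres_range.
Qed.

Lemma top_iso_Zadic_mul : top_iso Zab ZaZb.
Proof.
  apply (top_iso_of_inverse _ _ crt_split crt_join).
  - intros x y; unfold crt_split; rewrite !zred_add; reflexivity.
  - apply crt_join_split.
  - apply crt_split_join.
  - intros V HV x Hx. destruct (HV _ Hx) as [U [W [HU [HW [H1 [H2 H3]]]]]].
    destruct (zred_continuous _ _ Hn Ha divide_mul_l U HU x H1) as [k1 Hk1].
    destruct (zred_continuous _ _ Hn Hb divide_mul_r W HW x H2) as [k2 Hk2].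
    exists (Nat.max k1 k2). intros x' E.
    apply H3; [apply Hk1|apply Hk2]; apply (zres_eq_le _ Hn x' x (Nat.max k1 k2)); auto; lia.
  - intros V HV [y z] Hx. destruct (HV _ Hx) as [k Hk].
    exists (fun y' => zres a Ha y' k = zres a Ha y k), (fun z' => zres b Hb z' k = zres b Hb z k).
    repeat split; try apply zres_cyl_open.
    intros y' z' E1 E2. apply Hk. simpl. rewrite E1, E2; reflexivity.
Qed.
End CRT.

Lemma top_iso_Zadic_eq n m (H1 : 2 <= n) (H2 : 2 <= m) :
  n = m -> top_iso (Zadic n H1) (Zadic m H2).
Proof. intros ->. rewrite (proof_irrelevance _ H1 H2). apply top_iso_refl. Qed.

Lemma prime_divisor_exists n : 2 <= n -> exists p, prime p /\ (p | n).
Proof.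
  intros Hn. assert (H0 : 0 <= n) by lia. revert Hn; pattern n.
  apply Z_lt_induction; [|exact H0]. clear n H0; intros n IH Hn.
  destruct (prime_dec n) as [Hp|Hp]; [exists n; split; auto; apply Z.divide_refl|].
  destruct (not_prime_divide n) as [d [Hd Hdn]]; auto; [lia|].
  destruct (IH d) as [p [Hp' Hpd]]; try lia.
  exists p; split; auto. eapply Z.divide_trans; eauto.
Qed.

Lemma prime_power_split p n : prime p -> 1 <= n ->
  exists e b, n = p ^ Z.of_nat e * b /\ 1 <= b /\ ~ (p | b).
Proof.
  intros Hp Hn. pose proof (prime_ge_2 _ Hp). assert (H0 : 0 <= n) by lia. revert Hn; pattern n.
  apply Z_lt_induction; [|exact H0]. clear n H0; intros n IH Hn.
  destruct (classic (p | n)) as [[m Hm]|Hpn];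
    [|exists 0%nat, n; split; [rewrite Z.pow_0_r; ring|auto]].
  destruct (IH m) as [e [b [Eb [Hb Hpb]]]]; try nia.
  exists (S e), b; repeat split; auto.
  rewrite Hm, Eb, Nat2Z.inj_succ, Z.pow_succ_r by lia. ring.
Qed.

Definition Zp (s : {p : Z | prime p}) : TopAb :=
  Zadic (proj1_sig s) (prime_ge_2 _ (proj2_sig s)).

Lemma top_iso_Zadic_Zp_prod n (Hn : 2 <= n) : exists ps, top_iso (Zadic n Hn) (bigprod (map Zp ps)).
Proof.
  assert (H0 : 0 <= n) by lia. revert Hn; pattern n.
  apply Z_lt_induction; [|exact H0]. clear n H0; intros n IH Hn.
  destruct (prime_divisor_exists n Hn) as [p [Hp Hpn]].
  pose proof (prime_ge_2 _ Hp).
  destruct (prime_power_split p n Hp ltac:(lia)) as [e [b [Eb [Hb Hpb]]]].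
  assert (He : (1 <= e)%nat).
  { destruct e; [|lia]. rewrite Eb, Z.pow_0_r, Z.mul_1_l in Hpn; contradiction. }
  assert (Hpe : 2 <= p ^ Z.of_nat e).
  { apply Z.le_trans with (p ^ 1); [lia|]. apply Z.pow_le_mono_r; lia. }
  set (s := exist (fun p => prime p) p Hp).
  assert (Is : top_iso (Zadic (p ^ Z.of_nat e) Hpe) (Zp s)).
  { eapply top_iso_trans; [apply (top_iso_Zadic_pow p e H He Hpe)|].
    apply top_iso_Zadic_eq; reflexivity. }
  destruct (Z.eq_dec b 1) as [Hb1|Hb1].
  - exists (s :: nil).
    eapply top_iso_trans; [apply (top_iso_Zadic_eq n _ Hn Hpe); rewrite Eb, Hb1; ring|].
    eapply top_iso_trans; [exact Is|].
    apply top_iso_sym, top_iso_prod_unit, open_local_Zadic.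
  - assert (Hb2 : 2 <= b) by lia.
    destruct (IH b ltac:(nia) Hb2) as [ps Hps]. exists (s :: ps).
    assert (Hrp : rel_prime (p ^ Z.of_nat e) b).
    { apply rel_prime_sym, rel_prime_Zpower_r; [lia|].
      apply rel_prime_sym, prime_rel_prime; auto. }
    assert (Hn' : 2 <= p ^ Z.of_nat e * b) by nia.
    eapply top_iso_trans; [apply (top_iso_Zadic_eq n _ Hn Hn' Eb)|].
    eapply top_iso_trans; [apply (top_iso_Zadic_mul _ _ Hpe Hb2 Hrp Hn')|].
    apply top_iso_prod; auto.
Qed.

Close Scope Z_scope.

(** * Torsion-free adic groups *)

Lemma tmuln_injective_finite_trivial (A : TopAb) :
  is_abgroup A -> finite_car A -> tmuln_injective A -> forall x : A, x = tzero.
Proof.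
  intros HA [l Hl] Hinj x.
  set (N := length l). set (f := fun i => tmuln A i x).
  assert (Hrep : exists i j, (i < j <= N)%nat /\ f i = f j).
  { apply NNPP; intros Hno.
    assert (ND : NoDup (map f (seq 0 (S N)))).
    { apply NoDup_map_NoDup_ForallPairs; [|apply seq_NoDup].
      intros i j Hi Hj E. apply in_seq in Hi; apply in_seq in Hj.
      destruct (Nat.lt_total i j) as [H|[H|H]]; auto;
        exfalso; apply Hno; [exists i, j|exists j, i]; split; auto; lia. }
    apply NoDup_incl_length with (l' := l) in ND; [|intros y _; apply Hl].
    rewrite length_map, length_seq in ND. unfold N in ND; lia. }
  destruct Hrep as [i [j [Hij E]]].
  assert (Hd : tmuln A (j - i) x = tzero).
  { apply (tadd_cancel_l A HA (tmuln A i x)). rewrite (tadd_0r A HA), <- (tmulnDn A HA).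
    replace (i + (j - i))%nat with j by lia. symmetry; exact E. }
  apply (Hinj (j - i)%nat); [lia|]. rewrite Hd, (tmuln_zero A HA); auto.
Qed.

Lemma top_iso_adic_Zp_prod l : Forall adic_factor l -> tmuln_injective (bigprod l) ->
  exists ps, top_iso (bigprod l) (bigprod (map Zp ps)).
Proof.
  induction 1 as [|A l HA Hl IH]; intros Hinj; [exists nil; apply top_iso_refl|].
  destruct (IH (tmuln_injective_prod_r _ _ Hinj)) as [ps Hps].
  destruct HA as [[HgA [Hfin Hdisc]]|[n [Hn HiA]]].
  - exists ps.
    eapply top_iso_trans; [apply top_iso_prod; [|exact Hps]|].
    + apply top_iso_unit_of_trivial; auto.
      apply tmuln_injective_finite_trivial; eauto using tmuln_injective_prod_l.
    + apply top_iso_unit_prod, open_local_bigprod.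
  - destruct (top_iso_Zadic_Zp_prod n Hn) as [qs Hqs]. exists (qs ++ ps).
    eapply top_iso_trans;
      [apply top_iso_prod; [eapply top_iso_trans; [exact HiA|exact Hqs]|exact Hps]|].
    rewrite map_app. apply top_iso_sym, top_iso_bigprod_app.
Qed.

(** * Extending isomorphisms of open subgroups *)

Definition open_inter_closed (A : TopAb) : Prop :=
  forall U V, topen A U -> topen A V -> topen A (fun x => U x /\ V x).

Definition is_topgroup (A : TopAb) : Prop :=
  is_abgroup A /\ open_local A /\ open_inter_closed A /\ sub_continuous A.

Lemma is_topgroup_LCA G : is_LCA G -> is_topgroup G.
Proof.
  intros [HA [[_ [Hinter Hunion]] [Hsub _]]].
  split; [exact HA|split; [|split; [exact Hinter|exact Hsub]]].
  intros V HV.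
  eapply topen_ext; [|apply (Hunion (fun U => topen G U /\ forall y, U y -> V y))].
  - intros x; split; [intros [U [[_ HU] Ux]]; auto|].
    intros Vx. destruct (HV x Vx) as [U [HU [Ux HUV]]]. exists U; auto.
  - intros U [HU _]; auto.
Qed.

Lemma topen_translate A : is_topgroup A -> forall U, topen A U -> forall c : A,
  topen A (fun z => U (tadd c z)).
Proof.
  intros [HA [HL [_ HS]]] U HU c. apply HL. intros z Hz.
  assert (E : forall a, tadd a (topp (topp c)) = tadd c a).
  { intros a; rewrite (topp_involutive A HA), (tadd_comm A HA); auto. }
  destruct (HS U HU z (topp c)) as [V [W [HV [HW [Vz [Wc H]]]]]]; [rewrite E; auto|].
  exists V; repeat split; auto. intros a Ha. rewrite <- E. apply H; auto.
Qed.

Lemma subTopAb_eq (A : TopAb) (M : A -> Prop) (HM : is_subgroup A M) (z1 z2 : subTopAb A M HM) :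
  proj1_sig z1 = proj1_sig z2 -> z1 = z2.
Proof.
  destruct z1 as [x1 p1], z2 as [x2 p2]; simpl; intros ->. f_equal; apply proof_irrelevance.
Qed.

Lemma abgroup_sub A M HM : is_abgroup A -> is_abgroup (subTopAb A M HM).
Proof.
  intros HA; repeat split; intros; apply subTopAb_eq; simpl.
  - apply tadd_assoc; auto.
  - apply tadd_comm; auto.
  - apply tadd_0l; auto.
  - apply tadd_Nl; auto.
Qed.

Lemma tmuln_sub_val A M HM n (z : subTopAb A M HM) :
  proj1_sig (tmuln _ n z) = tmuln A n (proj1_sig z).
Proof. induction n; simpl; auto. rewrite IHn; auto. Qed.

Lemma torsion_free_sub A M HM : torsion_free A -> torsion_free (subTopAb A M HM).
Proof.
  intros Htf z n Hn E. apply subTopAb_eq. simpl. apply (Htf _ n Hn).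
  rewrite <- tmuln_sub_val, E; reflexivity.
Qed.

Section Extension.
Variables (G T : TopAb) (M : G -> Prop) (N : T -> Prop)
  (HM : is_subgroup G M) (HN : is_subgroup T N).
Hypotheses (GG : is_topgroup G) (GT : is_topgroup T) (M_open : topen G M).
Variable f : subTopAb G M HM -> subTopAb T N HN.
Hypotheses (f_add : forall x y, f (tadd x y) = tadd (f x) (f y)) (f_cont : continuous_map _ _ f).
Hypothesis G_torsion : forall x : G, exists n, (0 < n)%nat /\ M (tmuln G n x).
Hypothesis T_div : forall t : T, N t -> forall n, (0 < n)%nat -> exists y, tmuln T n y = t.
Hypothesis T_tf : torsion_free T.

Let HG := proj1 GG.
Let HT := proj1 GT.

Definition fval (m : G) (H : M m) : T := proj1_sig (f (exist _ m H)).

Lemma fval_eq m m' H H' : m = m' -> fval m H = fval m' H'.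
Proof. intros ->. rewrite (proof_irrelevance _ H H'); auto. Qed.

Lemma fval_N m H : N (fval m H).
Proof. unfold fval; destruct (f (exist _ m H)); auto. Qed.

Lemma fval_add m m' H H' H'' : fval (tadd m m') H'' = tadd (fval m H) (fval m' H').
Proof.
  unfold fval.
  replace (exist (fun x => M x) (tadd m m') H'') with
    (tadd (exist (fun x => M x) m H : subTopAb G M HM) (exist (fun x => M x) m' H'))
    by (apply subTopAb_eq; reflexivity).
  rewrite f_add; reflexivity.
Qed.

Lemma fval_tmuln c m H H' : fval (tmuln G c m) H' = tmuln T c (fval m H).
Proof.
  unfold fval.
  replace (exist (fun x => M x) (tmuln G c m) H') with
    (tmuln (subTopAb G M HM) c (exist (fun x => M x) m H))
    by (apply subTopAb_eq; rewrite tmuln_sub_val; reflexivity).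
  rewrite (hom_tmuln _ _ f f_add (abgroup_sub _ _ _ HT) (abgroup_sub _ _ _ HG)).
  apply tmuln_sub_val.
Qed.

Lemma fval_zero H : fval tzero H = tzero.
Proof.
  unfold fval.
  replace (exist (fun x => M x) tzero H) with (@tzero (subTopAb G M HM))
    by (apply subTopAb_eq; reflexivity).
  rewrite (hom_zero _ _ f f_add (abgroup_sub _ _ _ HT) (abgroup_sub _ _ _ HG)). reflexivity.
Qed.

Definition tors_index (x : G) : nat :=
  proj1_sig (constructive_indefinite_description _ (G_torsion x)).

Lemma tors_index_spec x : (0 < tors_index x)%nat /\ M (tmuln G (tors_index x) x).
Proof. unfold tors_index; destruct constructive_indefinite_description; auto. Qed.

Definition extension (x : G) : T :=
  proj1_sig (constructive_indefinite_description _
    (T_div _ (fval_N _ (proj2 (tors_index_spec x))) _ (proj1 (tors_index_spec x)))).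

Lemma extension_tors_index x :
  tmuln T (tors_index x) (extension x) = fval _ (proj2 (tors_index_spec x)).
Proof. unfold extension; destruct constructive_indefinite_description; auto. Qed.

(* Both sides, multiplied by c = tors_index x, equal fval (c (n x)). *)
Lemma extension_spec x n (H : M (tmuln G n x)) : tmuln T n (extension x) = fval _ H.
Proof.
  destruct (tors_index_spec x) as [Hc Hcx]. set (c := tors_index x) in *.
  apply (torsion_free_tmuln_inj T HT T_tf c); auto.
  assert (H1 : M (tmuln G c (tmuln G n x))) by (apply subgroup_tmuln; auto).
  assert (H2 : M (tmuln G n (tmuln G c x))) by (apply subgroup_tmuln; auto).
  rewrite <- (fval_tmuln c _ H H1), <- (tmulnM T HT), Nat.mul_comm, (tmulnM T HT).
  unfold c; rewrite extension_tors_index, <- (fval_tmuln n _ _ H2).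
  apply fval_eq. rewrite <- !(tmulnM G HG), Nat.mul_comm; auto.
Qed.

Lemma extension_unique x n (H : M (tmuln G n x)) y :
  (0 < n)%nat -> tmuln T n y = fval _ H -> extension x = y.
Proof.
  intros Hn E. apply (torsion_free_tmuln_inj T HT T_tf n); auto. rewrite E; apply extension_spec.
Qed.

Lemma extension_add x x' : extension (tadd x x') = tadd (extension x) (extension x').
Proof.
  destruct (tors_index_spec x) as [Hc Hcx], (tors_index_spec x') as [Hc' Hcx'].
  set (n := (tors_index x * tors_index x')%nat).
  assert (H1 : M (tmuln G n x)).
  { unfold n; rewrite Nat.mul_comm, (tmulnM G HG); apply subgroup_tmuln; auto. }
  assert (H2 : M (tmuln G n x')).
  { unfold n; rewrite (tmulnM G HG); apply subgroup_tmuln; auto. }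
  assert (H3 : M (tmuln G n (tadd x x'))).
  { rewrite (tmulnD G HG). apply HM; auto. }
  apply (extension_unique _ _ H3); [unfold n; nia|].
  rewrite (tmulnD T HT), (extension_spec _ _ H1), (extension_spec _ _ H2).
  rewrite <- (fval_add _ _ H1 H2 (proj1 (proj2 HM) _ _ H1 H2)).
  apply fval_eq; rewrite (tmulnD G HG); auto.
Qed.

Lemma extension_restr m (H : M m) : extension m = fval m H.
Proof.
  assert (H1 : M (tmuln G 1 m)) by (apply subgroup_tmuln; auto).
  apply (extension_unique _ _ H1); auto. rewrite <- (fval_tmuln 1 m H H1); auto.
Qed.

(* On the open set x + M the extension is y |-> extension x + f (y - x). *)
Lemma extension_continuous : continuous_map G T extension.
Proof.
  pose proof GG as [_ [GL [GI _]]].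
  intros V HV. apply GL. intros x Hx.
  set (S := fun t => V (tadd (extension x) t)).
  assert (HS : topen T S) by (apply topen_translate; auto).
  destruct (f_cont (fun n => S (proj1_sig n))) as [U0 [HU0 EU0]];
    [exists S; split; auto; tauto|].
  exists (fun y => U0 (tadd (topp x) y) /\ M (tadd (topp x) y)). repeat split.
  - apply (topen_translate G GG (fun z => U0 z /\ M z)); auto.
  - rewrite (tadd_Nl G HG). apply (proj1 (EU0 (exist _ tzero (proj1 HM)))).
    simpl. fold (fval tzero (proj1 HM)). unfold S. rewrite fval_zero, (tadd_0r T HT); auto.
  - rewrite (tadd_Nl G HG). apply HM.
  - intros y [Hy1 Hy2].
    apply (proj2 (EU0 (exist _ _ Hy2))) in Hy1. simpl in Hy1. fold (fval _ Hy2) in Hy1.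
    unfold S in Hy1. rewrite <- extension_restr, <- extension_add in Hy1.
    rewrite (tadd_assoc G HG), (tadd_Nr G HG), (tadd_0l G HG) in Hy1; auto.
Qed.
End Extension.

Section ExtensionInverse.
Variables (G T : TopAb) (M : G -> Prop) (N : T -> Prop)
  (HM : is_subgroup G M) (HN : is_subgroup T N).
Hypotheses (GG : is_topgroup G) (GT : is_topgroup T).
Variables (f : subTopAb G M HM -> subTopAb T N HN) (g : subTopAb T N HN -> subTopAb G M HM).
Hypotheses (f_add : forall x y, f (tadd x y) = tadd (f x) (f y))
  (g_add : forall x y, g (tadd x y) = tadd (g x) (g y)) (gf : forall x, g (f x) = x).
Hypotheses (G_torsion : forall x : G, exists n, (0 < n)%nat /\ M (tmuln G n x))
  (T_torsion : forall t : T, exists n, (0 < n)%nat /\ N (tmuln T n t)).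
Hypotheses (G_div : forall x : G, M x -> forall n, (0 < n)%nat -> exists y, tmuln G n y = x)
  (T_div : forall t : T, N t -> forall n, (0 < n)%nat -> exists y, tmuln T n y = t).
Hypotheses (G_tf : torsion_free G) (T_tf : torsion_free T).

Lemma extension_inverse x :
  extension T G N M HN HM g T_torsion G_div (extension G T M N HM HN f G_torsion T_div x) = x.
Proof.
  destruct (tors_index_spec G M G_torsion x) as [Hn Hx].
  set (n := tors_index G M G_torsion x) in *.
  set (y := extension G T M N HM HN f G_torsion T_div x).
  assert (Hy : N (tmuln T n y)).
  { unfold y; rewrite (extension_spec G T M N HM HN GG GT f f_add G_torsion T_div T_tf x n Hx).
    apply fval_N. }
  apply (extension_unique T G N M HN HM GT GG g g_add T_torsion G_div G_tf _ n Hy); auto.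
  unfold fval.
  replace (exist (fun t => N t) (tmuln T n y) Hy) with (f (exist (fun x => M x) _ Hx)).
  - rewrite gf; reflexivity.
  - apply subTopAb_eq. simpl.
    unfold y; rewrite (extension_spec G T M N HM HN GG GT f f_add G_torsion T_div T_tf x n Hx).
    reflexivity.
Qed.
End ExtensionInverse.

Theorem top_iso_of_open_subgroups (G T : TopAb) (M : G -> Prop) (N : T -> Prop)
  (HM : is_subgroup G M) (HN : is_subgroup T N) :
  is_topgroup G -> is_topgroup T -> topen G M -> topen T N ->
  top_iso (subTopAb G M HM) (subTopAb T N HN) ->
  (forall x : G, exists n, (0 < n)%nat /\ M (tmuln G n x)) ->
  (forall t : T, exists n, (0 < n)%nat /\ N (tmuln T n t)) ->
  (forall x : G, M x -> forall n, (0 < n)%nat -> exists y, tmuln G n y = x) ->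
  (forall t : T, N t -> forall n, (0 < n)%nat -> exists y, tmuln T n y = t) ->
  torsion_free G -> torsion_free T -> top_iso G T.
Proof.
  intros GG GT MO NO Hiso Gt Tt Gd Td Gtf Ttf.
  destruct (top_iso_inverse _ _ Hiso) as [f [g [fa [ga [gf [fg [fc gc]]]]]]].
  apply (top_iso_of_inverse G T (extension G T M N HM HN f Gt Td)
    (extension T G N M HN HM g Tt Gd)).
  - apply extension_add; auto.
  - apply extension_inverse; auto.
  - apply extension_inverse; auto.
  - apply extension_continuous; auto.
  - apply extension_continuous; auto.
Qed.

(** * Artinian quotients are torsion *)

Section ArtinianTorsion.
Variables (G : TopAb) (M : G -> Prop) (HM : is_subgroup G M) (HA : is_abgroup G).

Lemma subgroup_tmuln_diff (u m : G) c d : M m -> c <> d ->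
  tmuln G c u = tadd m (tmuln G d u) -> exists n, (0 < n)%nat /\ M (tmuln G n u).
Proof.
  intros Hm Hcd E. destruct (Nat.lt_total c d) as [Hlt|[Heq|Hgt]]; [|contradiction|].
  - exists (d - c)%nat; split; [lia|].
    assert (E' : tadd (tmuln G c u) (tadd (tmuln G (d - c) u) m) = tadd (tmuln G c u) tzero).
    { rewrite (tadd_0r G HA), (tadd_assoc G HA), <- (tmulnDn G HA), E, (tadd_comm G HA).
      f_equal; f_equal; lia. }
    apply (tadd_cancel_l G HA), (topp_unique G HA) in E'.
    rewrite <- (topp_involutive G HA (tmuln G (d - c) u)), <- E'.
    apply HM, Hm.
  - exists (c - d)%nat; split; [lia|].
    replace c with ((c - d) + d)%nat in E by lia.
    rewrite (tmulnDn G HA), !(tadd_comm G HA _ (tmuln G d u)) in E.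
    apply (tadd_cancel_l G HA) in E. rewrite E; exact Hm.
Qed.

Variable x : G.

(* M + Z 2^i x: a decreasing chain, which is strict unless some n x lies in M. *)
Definition dyadic_chain (i : nat) (y : G) : Prop :=
  exists m a b, M m /\ y = tadd m (tadd (tmuln G (a * 2 ^ i) x) (topp (tmuln G (b * 2 ^ i) x))).

Lemma dyadic_chain_subgroup i : is_subgroup G (dyadic_chain i).
Proof.
  destruct HM as [HM0 [HMadd HMopp]]. repeat split.
  - exists tzero, 0%nat, 0%nat; split; auto. simpl. rewrite (topp_0 G HA), !(tadd_0l G HA); auto.
  - intros y y' [m [a [b [Hm ->]]]] [m' [a' [b' [Hm' ->]]]].
    exists (tadd m m'), (a + a')%nat, (b + b')%nat; split; auto.
    rewrite !Nat.mul_add_distr_r, !(tmulnDn G HA), (topp_add G HA).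
    rewrite (tadd_swap4 G HA m), (tadd_swap4 G HA (tmuln G (a * 2 ^ i) x)); reflexivity.
  - intros y [m [a [b [Hm ->]]]]. exists (topp m), b, a; split; auto.
    rewrite !(topp_add G HA), (topp_involutive G HA). f_equal; apply (tadd_comm G HA).
Qed.

Lemma dyadic_chain_contains i y : M y -> dyadic_chain i y.
Proof.
  intros Hy. exists y, 0%nat, 0%nat; split; auto.
  simpl. rewrite (topp_0 G HA), !(tadd_0r G HA); auto.
Qed.

Lemma dyadic_chain_decr i y : dyadic_chain (S i) y -> dyadic_chain i y.
Proof.
  intros [m [a [b [Hm ->]]]]. exists m, (2 * a)%nat, (2 * b)%nat; split; auto.
  rewrite Nat.pow_succ_r', !Nat.mul_assoc, !(Nat.mul_comm _ 2). reflexivity.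
Qed.

Lemma dyadic_chain_strict i : dyadic_chain (S i) (tmuln G (2 ^ i) x) ->
  exists n, (0 < n)%nat /\ M (tmuln G n x).
Proof.
  intros [m [a [b [Hm E]]]]. set (u := tmuln G (2 ^ i) x) in *.
  assert (Hu : forall c, tmuln G (c * 2 ^ S i) x = tmuln G (2 * c) u).
  { intros c; unfold u; rewrite <- (tmulnM G HA). f_equal. rewrite Nat.pow_succ_r'; lia. }
  rewrite !Hu in E.
  assert (E2 : tmuln G (1 + 2 * b) u = tadd m (tmuln G (2 * a) u)).
  { rewrite (tmulnDn G HA), (tmuln1 G HA).
    set (A := tmuln G (2 * a) u) in *; set (B := tmuln G (2 * b) u) in *.
    rewrite E at 1. rewrite <- !(tadd_assoc G HA), (tadd_Nl G HA), (tadd_0r G HA); reflexivity. }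
  destruct (subgroup_tmuln_diff u m (1 + 2 * b) (2 * a) Hm ltac:(lia) E2) as [n [Hn Hnu]].
  exists (n * 2 ^ i)%nat; split; [pose proof (Nat.pow_nonzero 2 i); nia|].
  rewrite (tmulnM G HA); exact Hnu.
Qed.
End ArtinianTorsion.

Lemma quotient_artinian_torsion (G : TopAb) (M : G -> Prop) :
  is_subgroup G M -> is_abgroup G -> quotient_artinian G M ->
  forall x, exists n, (0 < n)%nat /\ M (tmuln G n x).
Proof.
  intros HM HA Hart x. apply NNPP; intros Hno. apply Hart.
  exists (dyadic_chain G M x). split; intros i.
  - split; [apply dyadic_chain_subgroup|apply dyadic_chain_contains]; auto.
  - split; [apply dyadic_chain_decr|].
    exists (tmuln G (2 ^ i) x). split.
    + exists tzero, 1%nat, 0%nat; split; [apply HM|].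
      simpl. rewrite (topp_0 G HA), (tadd_0l G HA), !(tadd_0r G HA), Nat.add_0_r; auto.
    + intros H. apply Hno. apply (dyadic_chain_strict G M HM HA x i H).
Qed.

(** * The p-adic numbers *)

Open Scope R_scope.

Lemma Int_part_IZR z : Int_part (IZR z) = z.
Proof. symmetry; apply Int_part_spec; lra. Qed.

Lemma modR_unique x m y z : 0 < m -> 0 <= y < m -> y = x + IZR z * m -> modR x m = y.
Proof.
  intros Hm Hy E. unfold modR.
  assert (Hq : (- z)%Z = Int_part (x / m)).
  { apply Int_part_spec. rewrite opp_IZR.
    assert (Ex : x / m = y / m - IZR z) by (rewrite E; field; lra).
    rewrite Ex. assert (0 <= y / m < 1).
    { split; [apply Rmult_le_pos; [lra| left; apply Rinv_0_lt_compat; lra]|].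
      apply (Rmult_lt_reg_r m); [lra|]. unfold Rdiv; rewrite Rmult_assoc, Rinv_l; lra. }
    lra. }
  rewrite <- Hq, opp_IZR. lra.
Qed.

Lemma modR_eq_add_mul x m : exists z, modR x m = x + IZR z * m.
Proof. exists (- Int_part (x / m))%Z. unfold modR; rewrite opp_IZR; ring. Qed.

Lemma modR_add_mul x m z : 0 < m -> modR (x + IZR z * m) m = modR x m.
Proof.
  intros Hm. destruct (modR_eq_add_mul x m) as [q Hq].
  apply modR_unique with (q - z)%Z; auto; [apply modR_bound; auto|].
  rewrite Hq, minus_IZR; ring.
Qed.

Lemma modR_small x m : 0 <= x < m -> modR x m = x.
Proof. intros H. apply modR_unique with 0%Z; auto; lra. Qed.

Lemma modR_0 m : 0 < m -> modR 0 m = 0.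
Proof. intros; apply modR_small; lra. Qed.

Lemma modR_modR_add x c m : 0 < m -> modR (modR x m + c) m = modR (x + c) m.
Proof.
  intros Hm. destruct (modR_eq_add_mul x m) as [q Hq]. rewrite Hq.
  replace (x + IZR q * m + c) with ((x + c) + IZR q * m) by ring. apply modR_add_mul; auto.
Qed.

Lemma modR_IZR a m : (0 < m)%Z -> modR (IZR a) (IZR m) = IZR (a mod m).
Proof.
  intros Hm. apply modR_unique with (- (a / m))%Z.
  - apply IZR_lt; auto.
  - pose proof (Z.mod_pos_bound a m Hm). split; [apply IZR_le|apply IZR_lt]; lia.
  - rewrite <- mult_IZR, <- plus_IZR. f_equal. rewrite (Z.div_mod a m) at 2 by lia. ring.
Qed.

Section Qadic.
Variables (p : Z) (Hp : prime p).
Notation Qp_ := (Qadic p Hp).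
Notation P := (Z.to_nat p).

Lemma IZR_prime_ge_2 : 2 <= IZR p.
Proof. apply IZR_le, prime_ge_2, Hp. Qed.

Lemma INR_prime : INR P = IZR p.
Proof. rewrite INR_IZR_INZ, Z2Nat.id; auto. pose proof (prime_ge_2 p Hp); lia. Qed.

Lemma ppow_S k : ppow p (S k) = IZR p * ppow p k.
Proof. reflexivity. Qed.

Lemma ppow_le_mul k j : (k <= j)%nat -> ppow p j = ppow p k * IZR (p ^ Z.of_nat (j - k)).
Proof. intros H. rewrite <- pow_IZR. unfold ppow. rewrite <- pow_add. f_equal; lia. Qed.

Definition qres (x : Qp_) (k : nat) : R := proj1_sig x k.

Lemma qres_range (x : Qp_) k : 0 <= qres x k < ppow p k.
Proof. apply (proj2_sig x k). Qed.
Lemma qres_Z1p (x : Qp_) k : in_Z1p p (qres x k).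
Proof. apply (proj2_sig x k). Qed.

Lemma Qadic_eq (x y : Qp_) : (forall k, qres x k = qres y k) -> x = y.
Proof.
  destruct x as [f Hf], y as [g Hg]; unfold qres; simpl; intros H.
  assert (f = g) by (extensionality k; auto). subst; f_equal; apply proof_irrelevance.
Qed.

Lemma qres_sub (x : Qp_) k j : (k <= j)%nat -> exists z, qres x j - qres x k = IZR z * ppow p k.
Proof.
  induction 1; [exists 0%Z; lra|].
  destruct IHle as [z1 H1]. destruct (proj2 (proj2 (proj2_sig x m))) as [z Hz].
  fold (qres x (S m)) (qres x m) in Hz.
  exists (z1 + z * p ^ Z.of_nat (m - k))%Z. rewrite plus_IZR, mult_IZR.
  rewrite (ppow_le_mul k m) in Hz by auto. lra.
Qed.

Lemma qres_mod (x : Qp_) k j : (k <= j)%nat -> modR (qres x j) (ppow p k) = qres x k.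
Proof.
  intros H. destruct (qres_sub x k j H) as [z Hz].
  apply modR_unique with (- z)%Z; [apply ppow_pos, Hp| apply qres_range|].
  rewrite opp_IZR; lra.
Qed.

Lemma qres_eq_le (x y : Qp_) k j : (j <= k)%nat -> qres x k = qres y k -> qres x j = qres y j.
Proof. intros H E; rewrite <- (qres_mod x j k), <- (qres_mod y j k), E; auto. Qed.

Lemma qres_add (x y : Qp_) k : qres (tadd x y) k = modR (qres x k + qres y k) (ppow p k).
Proof. reflexivity. Qed.
Lemma qres_opp (x : Qp_) k : qres (topp x) k = modR (- qres x k) (ppow p k).
Proof. reflexivity. Qed.
Lemma qres_zero k : qres (@tzero Qp_) k = 0.
Proof. reflexivity. Qed.

Lemma Qadic_abgroup : is_abgroup Qp_.
Proof.
  pose proof (ppow_pos p Hp) as P. repeat split.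
  - intros x y z; apply Qadic_eq; intros k; rewrite !qres_add.
    rewrite (Rplus_comm (qres x k)), modR_modR_add, (Rplus_comm _ (qres z k)), modR_modR_add
      by auto.
    f_equal; ring.
  - intros x y; apply Qadic_eq; intros k; rewrite !qres_add; f_equal; ring.
  - intros x; apply Qadic_eq; intros k; rewrite qres_add, qres_zero, Rplus_0_l.
    apply modR_small, qres_range.
  - intros x; apply Qadic_eq; intros k.
    rewrite qres_add, qres_opp, qres_zero, modR_modR_add by auto.
    replace (- qres x k + qres x k) with 0 by ring. apply modR_0; auto.
Qed.

Lemma qres_cyl_open k (x : Qp_) : topen Qp_ (fun y => qres y k = qres x k).
Proof. intros y Hy; exists k; intros y' Hy'; unfold qres in *; congruence. Qed.

Lemma is_topgroup_Qadic : is_topgroup Qp_.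
Proof.
  split; [apply Qadic_abgroup|split; [|split]].
  - intros V H x Hx. destruct (H x Hx) as [U [HU [Ux HUV]]].
    destruct (HU x Ux) as [k Hk]. exists k; auto.
  - intros U V HU HV x [Ux Vx]. destruct (HU x Ux) as [k1 H1]; destruct (HV x Vx) as [k2 H2].
    exists (Nat.max k1 k2). intros y Hy; split; [apply H1|apply H2];
      apply (qres_eq_le y x (Nat.max k1 k2)); auto; lia.
  - intros U HU x y Hxy. destruct (HU _ Hxy) as [k Hk].
    exists (fun a => qres a k = qres x k), (fun b => qres b k = qres y k).
    repeat split; try apply qres_cyl_open.
    intros a b Ha Hb. apply Hk. change (qres (tadd a (topp b)) k = qres (tadd x (topp y)) k).
    rewrite !qres_add, !qres_opp, Ha, Hb; reflexivity.
Qed.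

Lemma qres_tmuln n (y : Qp_) k : qres (tmuln Qp_ n y) k = modR (INR n * qres y k) (ppow p k).
Proof.
  pose proof (ppow_pos p Hp k). induction n.
  - change (tmuln Qp_ 0 y) with (@tzero Qp_).
    rewrite qres_zero, Rmult_0_l, modR_0; auto.
  - change (tmuln Qp_ (S n) y) with (tadd y (tmuln Qp_ n y)).
    rewrite qres_add, IHn, (Rplus_comm (qres y k)), modR_modR_add by auto.
    rewrite S_INR; f_equal; ring.
Qed.

(* Residues are multiples of p^-j for some j, so B y = 0 with B coprime to p
   forces each residue to be a multiple of p^k, i.e. zero. *)
Lemma tmuln_coprime_inj (B : nat) (y : Qp_) : rel_prime (Z.of_nat B) p ->
  tmuln Qp_ B y = tzero -> y = tzero.
Proof.
  intros Hrp E. apply Qadic_eq; intros k. rewrite qres_zero.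
  pose proof (ppow_pos p Hp k) as Pk.
  assert (E1 := f_equal (fun z => qres z k) E). simpl in E1.
  change (qres (tmuln Qp_ B y) k = qres tzero k) in E1.
  rewrite qres_tmuln, qres_zero in E1.
  destruct (modR_eq_add_mul (INR B * qres y k) (ppow p k)) as [z Hz]. rewrite E1 in Hz.
  destruct (qres_Z1p y k) as [j [w Hw]].
  assert (Eint : (Z.of_nat B * w = (- z) * p ^ Z.of_nat (k + j))%Z).
  { apply eq_IZR. rewrite !mult_IZR, <- Hw, <- INR_IZR_INZ, <- pow_IZR, opp_IZR.
    rewrite pow_add. fold (ppow p k) (ppow p j).
    assert (HH : INR B * qres y k = - IZR z * ppow p k) by lra.
    rewrite <- Rmult_assoc, HH; ring. }
  assert (Hdiv : (p ^ Z.of_nat (k + j) | w)%Z).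
  { apply Gauss with (Z.of_nat B); [exists (- z)%Z; rewrite Eint; ring|].
    apply rel_prime_sym, rel_prime_Zpower_r; [lia|]. auto. }
  destruct Hdiv as [c Hc].
  assert (Hy : qres y k = 0 + IZR c * ppow p k).
  { assert (Pj := ppow_pos p Hp j).
    apply (Rmult_eq_reg_r (ppow p j)); [|lra]. rewrite Hw, Hc, mult_IZR, <- pow_IZR.
    unfold ppow; rewrite pow_add. ring. }
  rewrite <- (modR_small (qres y k) (ppow p k)) by apply qres_range.
  rewrite Hy, modR_add_mul, modR_0; auto.
Qed.

Lemma tmuln_p_inj (y : Qp_) : tmuln Qp_ P y = tzero -> y = tzero.
Proof.
  intros E. apply Qadic_eq; intros k. rewrite qres_zero.
  assert (E1 := f_equal (fun z => qres z (S k)) E). simpl in E1.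
  change (qres (tmuln Qp_ P y) (S k) = qres tzero (S k)) in E1.
  rewrite qres_tmuln, qres_zero, INR_prime in E1.
  destruct (modR_eq_add_mul (IZR p * qres y (S k)) (ppow p (S k))) as [z Hz].
  rewrite E1, ppow_S in Hz.
  assert (Hy : qres y (S k) = 0 + IZR (- z) * ppow p k).
  { rewrite opp_IZR. pose proof IZR_prime_ge_2.
    apply (Rmult_eq_reg_l (IZR p)); [|lra]. nra. }
  rewrite <- (qres_mod y k (S k)) by lia.
  rewrite Hy, modR_add_mul, modR_0; auto; apply ppow_pos, Hp.
Qed.

Lemma tmuln_ppow_inj e (y : Qp_) : tmuln Qp_ (P ^ e) y = tzero -> y = tzero.
Proof.
  revert y; induction e; intros y E.
  - rewrite Nat.pow_0_r, (tmuln1 Qp_ Qadic_abgroup) in E; auto.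
  - rewrite Nat.pow_succ_r', (tmulnM Qp_ Qadic_abgroup) in E. apply IHe, tmuln_p_inj; auto.
Qed.

Lemma nat_prime_power_split (n : nat) : (0 < n)%nat ->
  exists e B, n = (B * P ^ e)%nat /\ rel_prime (Z.of_nat B) p.
Proof.
  intros Hn. pose proof (prime_ge_2 p Hp).
  destruct (prime_power_split p (Z.of_nat n) Hp ltac:(lia)) as [e [b [Eb [Hb Hpb]]]].
  exists e, (Z.to_nat b). split.
  - apply Nat2Z.inj. rewrite Nat2Z.inj_mul, Nat2Z.inj_pow, !Z2Nat.id by lia. rewrite Eb; ring.
  - rewrite Z2Nat.id by lia. apply rel_prime_sym, prime_rel_prime; auto.
Qed.

Lemma Qadic_torsion_free : torsion_free Qp_.
Proof.
  intros y n Hn E. destruct (nat_prime_power_split n Hn) as [e [B [-> Hrp]]].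
  rewrite (tmulnM Qp_ Qadic_abgroup) in E.
  apply (tmuln_ppow_inj e), (tmuln_coprime_inj B); auto.
Qed.
End Qadic.

(* Z_p inside Q_p: the points whose residue modulo p^0 = 1 vanishes. *)
Definition Qadic_int (p : Z) (Hp : prime p) (x : Qadic p Hp) : Prop := qres p Hp x 0 = 0.

Section QadicInt.
Variables (p : Z) (Hp : prime p).
Notation Qp_ := (Qadic p Hp).
Notation P := (Z.to_nat p).
Notation qres := (qres p Hp).
Notation Zp_ := (Qadic_int p Hp).

Lemma qres_int (x : Qp_) k : Zp_ x -> qres x k = IZR (Int_part (qres x k)).
Proof.
  intros Hx. destruct (qres_sub p Hp x 0 k) as [z Hz]; [lia|].
  unfold Qadic_int in Hx. rewrite Hx in Hz. unfold ppow in Hz; simpl in Hz.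
  replace (qres x k) with (IZR z) by lra. rewrite Int_part_IZR; auto.
Qed.

Lemma Qadic_int_subgroup : is_subgroup Qp_ Zp_.
Proof.
  unfold Qadic_int; repeat split.
  - intros x y Hx Hy. rewrite qres_add, Hx, Hy, Rplus_0_l. apply modR_0; unfold ppow; simpl; lra.
  - intros x Hx. rewrite qres_opp, Hx, Ropp_0. apply modR_0; unfold ppow; simpl; lra.
Qed.

Lemma Qadic_int_open : topen Qp_ Zp_.
Proof. intros x Hx. exists 0%nat. intros y Hy. unfold Qadic_int, qres in *. congruence. Qed.

(* x_0 lies in p^-j Z for some j, and then p^j x is integral. *)
Lemma Qadic_int_tmuln (x : Qp_) : exists n, (0 < n)%nat /\ Zp_ (tmuln Qp_ n x).
Proof.
  destruct (qres_Z1p p Hp x 0) as [j [w Hw]]. exists (P ^ j)%nat. split.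
  - apply Nat.neq_0_lt_0, Nat.pow_nonzero. pose proof (prime_ge_2 p Hp); lia.
  - unfold Qadic_int. rewrite qres_tmuln, pow_INR, (INR_prime p Hp). fold (ppow p j).
    rewrite Rmult_comm, Hw. change (ppow p 0) with (IZR 1).
    rewrite modR_IZR, Z.mod_1_r by lia; reflexivity.
Qed.

(* Dividing by p shifts the sequence of residues. *)
Lemma Qadic_div_p_ok (x : Qp_) : Qp_ok p (fun k => qres x (S k) / IZR p).
Proof.
  pose proof (IZR_prime_ge_2 p Hp) as HP. intros k; split; [|split].
  - destruct (qres_Z1p p Hp x (S k)) as [j [w Hw]]. exists (S j), w.
    rewrite <- Hw. unfold ppow; simpl. field; lra.
  - destruct (qres_range p Hp x (S k)) as [H1 H2]. rewrite ppow_S in H2. split.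
    + apply Rmult_le_pos; [lra|]. left; apply Rinv_0_lt_compat; lra.
    + apply (Rmult_lt_reg_l (IZR p)); [lra|]. field_simplify; lra.
  - destruct (qres_sub p Hp x (S k) (S (S k))) as [z Hz]; [lia|].
    exists z. rewrite ppow_S in Hz.
    replace (qres x (S (S k)) / IZR p - qres x (S k) / IZR p) with
      ((qres x (S (S k)) - qres x (S k)) / IZR p) by (field; lra).
    rewrite Hz. field; lra.
Qed.

Lemma Qadic_div_p (x : Qp_) : exists y : Qp_, tmuln Qp_ P y = x.
Proof.
  exists (exist _ _ (Qadic_div_p_ok x)). apply Qadic_eq; intros k.
  rewrite qres_tmuln, (INR_prime p Hp). unfold qres at 1; simpl. fold (qres x (S k)).
  replace (IZR p * (qres x (S k) / IZR p)) with (qres x (S k))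
    by (pose proof (IZR_prime_ge_2 p Hp); field; lra).
  apply (qres_mod p Hp); lia.
Qed.

Lemma Qadic_div_ppow e (x : Qp_) : exists y : Qp_, tmuln Qp_ (P ^ e) y = x.
Proof.
  revert x; induction e; intros x.
  - exists x. apply (tmuln1 Qp_ (Qadic_abgroup p Hp)).
  - destruct (IHe x) as [w Hw]. destruct (Qadic_div_p w) as [y Hy]. exists y.
    rewrite Nat.pow_succ_r', Nat.mul_comm, (tmulnM Qp_ (Qadic_abgroup p Hp)), Hy; auto.
Qed.

Section CoprimeDivision.
Variables (B : nat) (HB : rel_prime (Z.of_nat B) p) (x : Qp_) (Hx : Zp_ x).

Lemma rel_prime_ppow k : rel_prime (Z.of_nat B) (p ^ Z.of_nat k).
Proof. apply rel_prime_Zpower_r; auto; lia. Qed.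

Lemma Zppow_pos k : (0 < p ^ Z.of_nat k)%Z.
Proof. apply Z.pow_pos_nonneg; [pose proof (prime_ge_2 p Hp)|]; lia. Qed.

Lemma inv_mod_ex k : exists u v, (u * Z.of_nat B + v * p ^ Z.of_nat k = 1)%Z.
Proof. destruct (rel_prime_bezout _ _ (rel_prime_ppow k)) as [u v H]. exists u, v; auto. Qed.

Definition inv_mod k : Z := proj1_sig (constructive_indefinite_description _ (inv_mod_ex k)).

Lemma inv_mod_spec k : exists v, (inv_mod k * Z.of_nat B + v * p ^ Z.of_nat k = 1)%Z.
Proof. unfold inv_mod; destruct constructive_indefinite_description; auto. Qed.

Definition ires k : Z := Int_part (qres x k).

Lemma ires_eq k : qres x k = IZR (ires k).
Proof. apply qres_int; auto. Qed.

Lemma ires_range k : (0 <= ires k < p ^ Z.of_nat k)%Z.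
Proof.
  pose proof (qres_range p Hp x k) as R. rewrite ires_eq, ppow_IZR in R.
  split; [apply le_IZR|apply lt_IZR]; lra.
Qed.

Lemma ires_divide_sub k : (p ^ Z.of_nat k | ires (S k) - ires k)%Z.
Proof.
  destruct (qres_sub p Hp x k (S k)) as [c Hc]; [lia|].
  rewrite !ires_eq, ppow_IZR, <- minus_IZR, <- mult_IZR in Hc. apply eq_IZR in Hc.
  exists c; auto.
Qed.

Definition qdiv_res k : Z := ((inv_mod k * ires k) mod p ^ Z.of_nat k)%Z.

Lemma qdiv_res_divide k : (p ^ Z.of_nat k | Z.of_nat B * qdiv_res k - ires k)%Z.
Proof.
  destruct (inv_mod_spec k) as [v Hv]. unfold qdiv_res.
  rewrite (Z.mod_eq _ _) by (pose proof (Zppow_pos k); lia).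
  exists (Z.of_nat B * (- ((inv_mod k * ires k) / p ^ Z.of_nat k)) - v * ires k)%Z.
  replace (ires k) with ((inv_mod k * Z.of_nat B + v * p ^ Z.of_nat k) * ires k)%Z at 3
    by (rewrite Hv; ring).
  ring.
Qed.

Lemma qdiv_res_divide_sub k : (p ^ Z.of_nat k | qdiv_res (S k) - qdiv_res k)%Z.
Proof.
  apply Gauss with (Z.of_nat B); [|apply rel_prime_sym, rel_prime_ppow].
  replace (Z.of_nat B * (qdiv_res (S k) - qdiv_res k))%Z with
    ((Z.of_nat B * qdiv_res (S k) - ires (S k)) + (ires (S k) - ires k)
      - (Z.of_nat B * qdiv_res k - ires k))%Z by ring.
  apply Z.divide_sub_r; [apply Z.divide_add_r|]; auto using qdiv_res_divide, ires_divide_sub.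
  eapply Z.divide_trans; [|apply qdiv_res_divide].
  exists p. rewrite Nat2Z.inj_succ, Z.pow_succ_r by lia. ring.
Qed.

Lemma qdiv_ok : Qp_ok p (fun k => IZR (qdiv_res k)).
Proof.
  intros k; split; [|split].
  - exists 0%nat, (qdiv_res k). unfold ppow; simpl; ring.
  - rewrite ppow_IZR. pose proof (Z.mod_pos_bound (inv_mod k * ires k) _ (Zppow_pos k)).
    split; [apply IZR_le|apply IZR_lt]; unfold qdiv_res; lia.
  - destruct (qdiv_res_divide_sub k) as [c Hc]. exists c.
    rewrite ppow_IZR, <- minus_IZR, <- mult_IZR, Hc; auto.
Qed.

Definition qdiv : Qp_ := exist _ _ qdiv_ok.

Lemma qdiv_spec : tmuln Qp_ B qdiv = x.
Proof.
  apply Qadic_eq; intros k. rewrite qres_tmuln. unfold qres at 1; simpl.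
  rewrite INR_IZR_INZ, <- mult_IZR, ppow_IZR, modR_IZR by apply Zppow_pos.
  rewrite ires_eq. f_equal. apply Zdivide_mod_minus; [apply ires_range|apply qdiv_res_divide].
Qed.
End CoprimeDivision.

Lemma Qadic_int_divisible (x : Qp_) : Zp_ x -> forall n, (0 < n)%nat ->
  exists y, tmuln Qp_ n y = x.
Proof.
  intros Hx n Hn. destruct (nat_prime_power_split p Hp n Hn) as [e [B [-> HB]]].
  destruct (Qadic_div_ppow e (qdiv B HB x Hx)) as [y Hy]. exists y.
  rewrite (tmulnM Qp_ (Qadic_abgroup p Hp)), Hy. apply qdiv_spec.
Qed.
End QadicInt.

Lemma sub_open_lift (A : TopAb) (M : A -> Prop) (HM : is_subgroup A M)
  (W : subTopAb A M HM -> Prop) :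
  topen A (fun x => exists H : M x, W (exist _ x H)) -> topen (subTopAb A M HM) W.
Proof.
  intros HO. exists (fun x => exists H : M x, W (exist _ x H)). split; auto.
  intros [x Hx]; simpl; split; [intros Hw; exists Hx; auto|].
  intros [H' Hw]. rewrite (proof_irrelevance _ Hx H'); auto.
Qed.

Section QadicIntZadic.
Variables (p : Z) (Hp : prime p) (HN : is_subgroup (Qadic p Hp) (Qadic_int p Hp)).
Notation qres := (qres p Hp).
Notation Zp_sub := (subTopAb (Qadic p Hp) (Qadic_int p Hp) HN).
Notation Zp_ := (Zadic p (prime_ge_2 p Hp)).

Lemma Qadic_int_to_Zadic_ok (z : Zp_sub) : Zn_ok p (fun k => Int_part (qres (proj1_sig z) k)).
Proof.
  destruct z as [x Hx]; simpl. intros k; split.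
  - pose proof (qres_range p Hp x k) as R. rewrite (qres_int p Hp x k Hx), ppow_IZR in R.
    split; [apply le_IZR|apply lt_IZR]; unfold npow; lra.
  - destruct (qres_sub p Hp x k (S k)) as [c Hc]; [lia|].
    rewrite (qres_int p Hp x k Hx), (qres_int p Hp x (S k) Hx), ppow_IZR, <- minus_IZR,
      <- mult_IZR in Hc.
    apply eq_IZR in Hc. exists c; auto.
Qed.

Definition Qadic_int_to_Zadic (z : Zp_sub) : Zp_ := exist _ _ (Qadic_int_to_Zadic_ok z).

Lemma Zadic_to_Qadic_ok (y : Zp_) : Qp_ok p (fun k => IZR (zres _ _ y k)).
Proof.
  intros k; split; [|split].
  - exists 0%nat, (zres _ _ y k). unfold ppow; simpl; ring.
  - rewrite ppow_IZR. pose proof (zres_range _ _ y k) as R. unfold npow in R.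
    split; [apply IZR_le|apply IZR_lt]; lia.
  - destruct (proj2 (proj2_sig y k)) as [c Hc]. exists c.
    rewrite ppow_IZR, <- minus_IZR, <- mult_IZR. unfold zres. rewrite Hc; auto.
Qed.

Lemma Zadic_to_Qadic_int (y : Zp_) : Qadic_int p Hp (exist _ _ (Zadic_to_Qadic_ok y)).
Proof.
  unfold Qadic_int, qres; simpl. pose proof (zres_range _ _ y 0) as R.
  unfold npow in R; simpl in R. replace (zres p (prime_ge_2 p Hp) y 0) with 0%Z by lia.
  reflexivity.
Qed.

Definition Zadic_to_Qadic (y : Zp_) : Zp_sub := exist _ _ (Zadic_to_Qadic_int y).

Lemma top_iso_Qadic_int_Zadic : top_iso Zp_sub Zp_.
Proof.
  apply (top_iso_of_inverse _ _ Qadic_int_to_Zadic Zadic_to_Qadic).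
  - intros [x Hx] [y Hy]. apply Zadic_eq; intros k. unfold Qadic_int_to_Zadic, zres; simpl.
    fold (qres x k) (qres y k). rewrite (qres_int p Hp x k Hx), (qres_int p Hp y k Hy) at 1.
    rewrite ppow_IZR, <- plus_IZR, modR_IZR
      by (apply Z.pow_pos_nonneg; pose proof (prime_ge_2 p Hp); lia).
    rewrite !Int_part_IZR. reflexivity.
  - intros [x Hx]. apply subTopAb_eq. simpl. apply Qadic_eq; intros k.
    unfold qres at 1; simpl. unfold zres; simpl. symmetry; apply (qres_int p Hp x k Hx).
  - intros y. apply Zadic_eq; intros k. unfold Qadic_int_to_Zadic, zres; simpl. apply Int_part_IZR.
  - intros V HV. apply sub_open_lift. intros x [Hx Hv].
    destruct (HV _ Hv) as [k Hk]. exists k. intros x' Hx'.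
    assert (Hx0 : Qadic_int p Hp x').
    { unfold Qadic_int. rewrite (qres_eq_le p Hp x' x k 0); auto; lia. }
    exists Hx0. apply Hk. simpl. fold (qres x' k) (qres x k).
    unfold qres in *. rewrite Hx'; reflexivity.
  - intros V [U [HU EU]] y Hy. apply EU in Hy. destruct (HU _ Hy) as [k Hk].
    exists k. intros y' Hy'. apply EU, Hk. simpl. unfold zres in *. rewrite Hy'; reflexivity.
Qed.
End QadicIntZadic.

Close Scope R_scope.

(** * Finite products of p-adic fields *)

Lemma is_topgroup_unit : is_topgroup unitTopAb.
Proof.
  split; [apply abgroup_unit|split; [apply open_local_unit|split]].
  - intros U V _ _; exact I.
  - intros U HU x y Hxy. exists (fun _ => True), (fun _ => True); repeat split; auto.
    all: intros a b _ _; destruct a, b, x, y; auto.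
Qed.

Lemma is_topgroup_prod A B : is_topgroup A -> is_topgroup B -> is_topgroup (prodTopAb A B).
Proof.
  intros [HA [LA [IA SA]]] [HB [LB [IB SB]]].
  split; [apply abgroup_prod; auto|split; [apply open_local_prod|split]].
  - intros U V HU HV z [Uz Vz].
    destruct (HU z Uz) as [U1 [U2 [HU1 [HU2 [H1 [H2 H3]]]]]].
    destruct (HV z Vz) as [V1 [V2 [HV1 [HV2 [H4 [H5 H6]]]]]].
    exists (fun a => U1 a /\ V1 a), (fun b => U2 b /\ V2 b).
    split; [apply IA; auto|split; [apply IB; auto|split; [split; auto|split; [split; auto|]]]].
    intros a b [Ha1 Ha2] [Hb1 Hb2]; split; auto.
  - intros U HU [x1 x2] [y1 y2] Hxy.
    destruct (HU _ Hxy) as [U1 [U2 [HU1 [HU2 [H1 [H2 H3]]]]]]. simpl in H1, H2.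
    destruct (SA U1 HU1 x1 y1 H1) as [V1 [W1 [HV1 [HW1 [Hx1 [Hy1 K1]]]]]].
    destruct (SB U2 HU2 x2 y2 H2) as [V2 [W2 [HV2 [HW2 [Hx2 [Hy2 K2]]]]]].
    exists (fun z : prodTopAb A B => V1 (fst z) /\ V2 (snd z)),
           (fun z : prodTopAb A B => W1 (fst z) /\ W2 (snd z)).
    repeat split; try apply prod_box_open; auto.
    intros [a1 a2] [b1 b2] [Ha1 Ha2] [Hb1 Hb2].
    apply (H3 (tadd a1 (topp b1)) (tadd a2 (topp b2))); auto.
Qed.

Lemma top_iso_sub_unit HN : top_iso (subTopAb unitTopAb (fun _ => True) HN) unitTopAb.
Proof.
  apply (top_iso_of_inverse (subTopAb unitTopAb (fun _ => True) HN) unitTopAb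
    (fun _ => tt) (fun _ => exist (fun _ : unitTopAb => True) tt I)).
  - intros; reflexivity.
  - intros [[] []]; apply subTopAb_eq; reflexivity.
  - intros []; reflexivity.
  - intros V _. exists (fun _ => V tt); split; [exact I|]. intros; tauto.
  - intros V _. exact I.
Qed.

Lemma top_iso_sub_prod (A B : TopAb) (N1 : A -> Prop) (N2 : B -> Prop)
  (HN1 : is_subgroup A N1) (HN2 : is_subgroup B N2) HN :
  open_inter_closed A -> open_inter_closed B -> topen A N1 -> topen B N2 ->
  top_iso (subTopAb (prodTopAb A B) (fun z => N1 (fst z) /\ N2 (snd z)) HN)
          (prodTopAb (subTopAb A N1 HN1) (subTopAb B N2 HN2)).
Proof.
  intros IA IB O1 O2.
  set (SP := subTopAb (prodTopAb A B) (fun z => N1 (fst z) /\ N2 (snd z)) HN).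
  set (PS := prodTopAb (subTopAb A N1 HN1) (subTopAb B N2 HN2)).
  apply (top_iso_of_inverse SP PS
    (fun z => (exist _ (fst (proj1_sig z)) (proj1 (proj2_sig z)),
               exist _ (snd (proj1_sig z)) (proj2 (proj2_sig z))) : PS)
    (fun w => exist (fun z : prodTopAb A B => N1 (fst z) /\ N2 (snd z))
        (proj1_sig (fst w), proj1_sig (snd w))
        (conj (proj2_sig (fst w)) (proj2_sig (snd w))) : SP)).
  - intros x y. apply injective_projections; apply subTopAb_eq; reflexivity.
  - intros [[a b] H]. apply subTopAb_eq; reflexivity.
  - intros [a b]. simpl. f_equal; apply subTopAb_eq; reflexivity.
  - intros V HV. apply sub_open_lift. intros w [H Hv].
    destruct (HV _ Hv) as [U' [W' [[U1 [HU1 EU1]] [[W1 [HW1 EW1]] [H1 [H2 H3]]]]]].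
    exists (fun a => U1 a /\ N1 a), (fun b => W1 b /\ N2 b). repeat split.
    + apply IA; auto.
    + apply IB; auto.
    + apply EU1 in H1; exact H1.
    + exact (proj1 H).
    + apply EW1 in H2; exact H2.
    + exact (proj2 H).
    + intros a b [Ha Na] [Hb Nb]. exists (conj Na Nb).
      apply H3; [apply EU1; exact Ha|apply EW1; exact Hb].
  - intros V [U [HU EU]] [a b] Hv. apply EU in Hv. simpl in Hv.
    destruct (HU _ Hv) as [U1 [U2 [HU1 [HU2 [H1 [H2 H3]]]]]].
    exists (fun a' : subTopAb A N1 HN1 => U1 (proj1_sig a')),
      (fun b' : subTopAb B N2 HN2 => U2 (proj1_sig b')).
    repeat split; auto.
    + exists U1; split; auto; tauto.
    + exists U2; split; auto; tauto.
    + intros a' b' Ha Hb. apply EU. simpl. apply H3; auto.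
Qed.

Definition Qp (s : {p : Z | prime p}) : TopAb := Qadic (proj1_sig s) (proj2_sig s).

Fixpoint Qp_int_prod (ps : list {p : Z | prime p}) : bigprod (map Qp ps) -> Prop :=
  match ps as l return bigprod (map Qp l) -> Prop with
  | nil => fun _ => True
  | s :: ps' => fun z => Qadic_int (proj1_sig s) (proj2_sig s) (fst z) /\ Qp_int_prod ps' (snd z)
  end.

Section QpProduct.
Variable ps : list {p : Z | prime p}.
Notation T := (bigprod (map Qp ps)).

Lemma is_topgroup_Qp_prod : is_topgroup T.
Proof.
  induction ps; simpl; [apply is_topgroup_unit|].
  apply is_topgroup_prod; auto. apply is_topgroup_Qadic.
Qed.

Lemma torsion_free_Qp_prod : torsion_free T.
Proof.
  induction ps; simpl; [intros [] _ _ _; reflexivity|].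
  apply torsion_free_prod; auto. apply Qadic_torsion_free.
Qed.

Lemma Qp_int_prod_subgroup : is_subgroup T (Qp_int_prod ps).
Proof.
  induction ps as [|s ps' IH]; simpl; [repeat split|].
  destruct (Qadic_int_subgroup (proj1_sig s) (proj2_sig s)) as [A0 [A1 A2]].
  destruct IH as [B0 [B1 B2]]. repeat split; simpl; try tauto.
  - apply A1; tauto.
  - apply B1; tauto.
  - apply A2; tauto.
  - apply B2; tauto.
Qed.

Lemma Qp_int_prod_open : topen T (Qp_int_prod ps).
Proof.
  induction ps as [|s ps' IH]; simpl; [exact I|].
  apply (prod_box_open (Qp s) (bigprod (map Qp ps'))); auto. apply Qadic_int_open.
Qed.

Lemma Qp_int_prod_divisible t : Qp_int_prod ps t -> forall n, (0 < n)%nat ->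
  exists y, tmuln T n y = t.
Proof.
  induction ps as [|s ps' IH]; simpl.
  - intros _ n _. exists (tt : unitTopAb). destruct (tmuln unitTopAb n tt), t; reflexivity.
  - destruct t as [t1 t2]. intros [H1 H2] n Hn.
    destruct (Qadic_int_divisible _ (proj2_sig s) t1 H1 n Hn) as [y1 Hy1].
    destruct (IH t2 H2 n Hn) as [y2 Hy2].
    exists ((y1, y2) : prodTopAb (Qp s) (bigprod (map Qp ps'))).
    change (tmuln (prodTopAb (Qp s) (bigprod (map Qp ps'))) n (y1, y2) = (t1, t2)).
    apply injective_projections; [rewrite tmuln_fst|rewrite tmuln_snd]; auto.
Qed.
End QpProduct.

Lemma Qp_int_prod_tmuln ps (t : bigprod (map Qp ps)) :
  exists n, (0 < n)%nat /\ Qp_int_prod ps (tmuln _ n t).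
Proof.
  induction ps as [|s ps IH]; simpl; [exists 1%nat; auto|].
  destruct t as [t1 t2].
  destruct (Qadic_int_tmuln _ (proj2_sig s) t1) as [n1 [Hn1 H1]].
  destruct (IH t2) as [n2 [Hn2 H2]].
  exists (n2 * n1)%nat. split; [nia|].
  change (Qadic_int (proj1_sig s) (proj2_sig s)
            (fst (tmuln (prodTopAb (Qp s) (bigprod (map Qp ps))) (n2 * n1) (t1, t2))) /\
          Qp_int_prod ps (snd (tmuln (prodTopAb (Qp s) (bigprod (map Qp ps))) (n2 * n1) (t1, t2)))).
  rewrite tmuln_fst, tmuln_snd; simpl. split.
  - rewrite (tmulnM _ (Qadic_abgroup _ (proj2_sig s))).
    apply subgroup_tmuln; auto using Qadic_abgroup, Qadic_int_subgroup.
  - rewrite Nat.mul_comm, (tmulnM _ (proj1 (is_topgroup_Qp_prod ps))).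
    apply subgroup_tmuln; auto using Qp_int_prod_subgroup.
Qed.

Lemma top_iso_Qp_int_prod ps (HN : is_subgroup _ (Qp_int_prod ps)) :
  top_iso (subTopAb (bigprod (map Qp ps)) (Qp_int_prod ps) HN) (bigprod (map Zp ps)).
Proof.
  revert HN; induction ps as [|s ps IH]; intros HN; simpl; [apply top_iso_sub_unit|].
  eapply top_iso_trans.
  - apply (top_iso_sub_prod (Qp s) (bigprod (map Qp ps)) _ _
             (Qadic_int_subgroup (proj1_sig s) (proj2_sig s)) (Qp_int_prod_subgroup ps)).
    + apply (proj1 (proj2 (proj2 (is_topgroup_Qadic _ _)))).
    + apply (proj1 (proj2 (proj2 (is_topgroup_Qp_prod ps)))).
    + apply Qadic_int_open.
    + apply Qp_int_prod_open.
  - apply top_iso_prod; [|apply IH]. destruct s as [p Hp]. apply top_iso_Qadic_int_Zadic.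
Qed.

Lemma adic_torsion_free_Zp_prod (A : TopAb) : is_abgroup A -> torsion_free A -> adic A ->
  exists ps, top_iso A (bigprod (map Zp ps)).
Proof.
  intros HA Htf [l [Hfac Hiso]].
  assert (Hinj : tmuln_injective (bigprod l)).
  { destruct (top_iso_sym _ _ Hiso) as [f [f_add [f_inj _]]].
    apply (tmuln_injective_of_hom _ _ f f_add f_inj HA Htf). }
  destruct (top_iso_adic_Zp_prod l Hfac Hinj) as [ps Hps].
  exists ps; eapply top_iso_trans; eauto.
Qed.

Theorem lemma6p10 (G : TopAb) (M : G -> Prop) (HM : is_subgroup G M) :
  is_LCA G ->
  tcompact G M -> topen G M ->
  divisible G -> torsion_free G ->
  adic (subTopAb G M HM) ->
  quotient_artinian G M ->
  local G.
Proof.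
  intros HL _ M_open Hdiv Htf Hadic Hart.
  pose proof (proj1 HL) as HG.
  destruct (adic_torsion_free_Zp_prod _ (abgroup_sub _ _ HM HG) (torsion_free_sub _ _ HM Htf) Hadic)
    as [ps Hps].
  exists ps.
  apply (top_iso_of_open_subgroups G (bigprod (map Qp ps)) M (Qp_int_prod ps) HM
           (Qp_int_prod_subgroup ps)).
  - apply is_topgroup_LCA; auto.
  - apply is_topgroup_Qp_prod.
  - exact M_open.
  - apply Qp_int_prod_open.
  - eapply top_iso_trans; [exact Hps|]. apply top_iso_sym, top_iso_Qp_int_prod.
  - apply quotient_artinian_torsion; auto.
  - apply Qp_int_prod_tmuln.
  - intros x _ n Hn. apply Hdiv, Hn.
  - apply Qp_int_prod_divisible.
  - exact Htf.
  - apply torsion_free_Qp_prod.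
Qed.
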